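(* Let $P_{2m}(\boldsymbol\lambda)$ be a parallel Eulerian graph with $m\ge1$, and let all edges have activation probability $p\in(0,1]$. Then for every edge $e$, the expected time for the uniform Eulerian strategy to traverse $e$ equals $$\frac{\theta(P_{2m}(\boldsymbol\lambda))+p^{-1}}{2}+\Phi_m.$$ Consequently, $\mathrm{val}(p)\le \frac{\theta(P_{2m}(\boldsymbol\lambda))+p^{-1}}{2}+\Phi_m$.
   Context: Setting: the stochastic search game. Every edge has length $1$ and is active at each stage independently with probability $p$. The hider chooses an edge and stays there. The searcher starts at the root; at each stage, knowing which edges are currently active, she waits or traverses an active edge incident to her position. The hider's payoff is the expected first time the searcher traverses his edge. $\mathrm{val}(p)$ is the value. Parallel graph $P_n(\boldsymbol\lambda)$, with $\boldsymbol\lambda=(\lambda_1,\dots,\lambda_n)$ positive integers: two vertices $O$ (the root) and $D$ joined by $n$ internally vertex-disjoint paths, the $i$-th having $\lambda_i$ edges. When $n=2m$ is even it is Eulerian, and is called a parallel Eulerian graph. Uniform Eulerian strategy: - at $O$ (respectively $D$), wait until at least one untraversed path edge incident to the current vertex is active, then choose uniformly among those active untraversed edges; - then follow the chosen path straight to the other endpoint, waiting whenever the next edge is inactive; - repeat until all edges are traversed. Cycle time: $\theta(P_{2m}(\boldsymbol\lambda))=\sum_{k=1}^{2m}\Big(\frac1{1-(1-p)^k}+\frac{\lambda_k-1}{p}\Big)$. $\Phi_m$ is defined recursively by $\Phi_1=\frac12\big(\frac1{1-(1-p)^2}-\frac1p\big)$ and, for $m>1$, $$\Phi_m=\frac12\frac1{1-(1-p)^{2m}}+\Big(\frac12-\frac1{2m}\Big)\frac1{1-(1-p)^{2m-1}}-\frac1{2m}\Big(\sum_{k=1}^{2(m-1)}\frac1{1-(1-p)^k}+\frac1p\Big)+\frac{m-1}{m}\Phi_{m-1}.$$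 *)

From Stdlib Require Import Reals List Arith Bool ClassicalEpsilon.
Import ListNotations.
Open Scope R_scope.

(** * The parallel graph P_n(lam)
    lam : list nat, path i (0 <= i < length lam) has (nth i lam 0) edges.
    Vertices: O (root), D, and internal vertices VI i j (0 < j < lam_i).
    Edge (i,j), j < lam_i, joins  pt i j  and  pt i (j+1). *)
Inductive vtx := VO | VD | VI (i j : nat).

Definition vtx_eqb (u v : vtx) : bool :=
  match u, v with
  | VO, VO => true
  | VD, VD => true
  | VI i j, VI k l => Nat.eqb i k && Nat.eqb j l
  | _, _ => false
  end.

Definition edge := (nat * nat)%type.
Definition edge_eqb (e f : edge) : bool :=
  Nat.eqb (fst e) (fst f) && Nat.eqb (snd e) (snd f).
Definition memb (e : edge) (l : list edge) : bool := existsb (edge_eqb e) l.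

Definition len (lam : list nat) (i : nat) : nat := nth i lam 0%nat.

Definition pt (lam : list nat) (i j : nat) : vtx :=
  if Nat.eqb j 0 then VO else if Nat.eqb j (len lam i) then VD else VI i j.
Definition src lam (e : edge) : vtx := pt lam (fst e) (snd e).
Definition tgt lam (e : edge) : vtx := pt lam (fst e) (S (snd e)).

Definition edges (lam : list nat) : list edge :=
  flat_map (fun i => map (fun j => (i, j)) (seq 0 (len lam i))) (seq 0 (length lam)).

Definition incident lam (v : vtx) (e : edge) : bool :=
  vtx_eqb v (src lam e) || vtx_eqb v (tgt lam e).

Definition cross lam (v : vtx) (e : edge) : vtx :=
  if vtx_eqb v (src lam e) then tgt lam e
  else if vtx_eqb v (tgt lam e) then src lam e else v.

(** * Random activation at one stage: every edge independently active with
    probability p.  List of (set of active edges, probability). *)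
Fixpoint patterns (p : R) (l : list edge) : list (list edge * R) :=
  match l with
  | [] => [([], 1)]
  | e :: l' =>
      map (fun aw => (e :: fst aw, p * snd aw)) (patterns p l')
      ++ map (fun aw => (fst aw, (1 - p) * snd aw)) (patterns p l')
  end.

Inductive move := Wait | Go (e : edge).

(** history (chronological): at each past stage, the active set and the move *)
Definition history := list (list edge * move).

(** a (behaviour) strategy: given history and the current active set,
    a finite distribution (weight, move) *)
Definition strategy := history -> list edge -> list (R * move).

Definition position lam (h : history) : vtx :=
  fold_left (fun v am => match snd am with Wait => v | Go e => cross lam v e end) h VO.

Definition traversed (h : history) (e : edge) : bool :=
  existsb (fun am => match snd am with Go f => edge_eqb f e | Wait => false end) h.

Definition legal lam (v : vtx) (A : list edge) (mv : move) : bool :=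
  match mv with
  | Wait => true
  | Go e => memb e (edges lam) && memb e A && incident lam v e
  end.

Definition sumR (l : list R) : R := fold_right Rplus 0 l.

Definition valid_strategy lam (sg : strategy) : Prop :=
  forall h A,
    (forall wm, In wm (sg h A) -> 0 <= fst wm /\ legal lam (position lam h) A (snd wm) = true)
    /\ sumR (map fst (sg h A)) = 1.

Fixpoint dist lam (p : R) (sg : strategy) (t : nat) : list (history * R) :=
  match t with
  | O => [([], 1)]
  | S t' =>
      flat_map (fun hw =>
        flat_map (fun aw =>
          map (fun wm => (fst hw ++ [(fst aw, snd wm)], snd hw * snd aw * fst wm))
              (sg (fst hw) (fst aw)))
          (patterns p (edges lam)))
        (dist lam p sg t')
  end.

(** P(T_e > t): probability that e is not traversed during stages 1..t *)
Definition tail lam p sg (e : edge) (t : nat) : R :=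
  sumR (map (fun hw => if traversed (fst hw) e then 0 else snd hw) (dist lam p sg t)).

(** the expected first traversal time of e equals X
    (tail-sum formula E[T] = sum_{t>=0} P(T > t)) *)
Definition exp_time lam p sg (e : edge) (X : R) : Prop :=
  infinite_sum (tail lam p sg e) X.

Fixpoint last_go (h : history) : option edge :=
  match h with
  | [] => None
  | am :: h' =>
      match last_go h' with
      | Some e => Some e
      | None => match snd am with Go e => Some e | Wait => None end
      end
  end.

Definition uniform_eulerian (lam : list nat) : strategy :=
  fun h A =>
    match position lam h with
    | VI i j =>
        (* follow the path straight on: continue in the direction of travel *)
        let nxt : edge :=
          match last_go h with
          | Some (_, l) => if Nat.eqb l j then (i, Nat.pred j) else (i, j)
          | None => (i, j)
          end in
        if memb nxt A then [(1, Go nxt)] else [(1, Wait)]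
    | v =>
        let c := filter (fun e => incident lam v e && memb e A && negb (traversed h e))
                        (edges lam) in
        match c with
        | [] => [(1, Wait)]
        | _ => map (fun e => (/ INR (length c), Go e)) c
        end
    end.

Definition theta (p : R) (lam : list nat) : R :=
  sumR (map (fun i => / (1 - (1 - p) ^ (S i)) + (INR (len lam i) - 1) / p)
            (seq 0 (length lam))).

Fixpoint Phi (p : R) (m : nat) : R :=
  match m with
  | O => 0
  | S m' =>
      match m' with
      | O => / 2 * (/ (1 - (1 - p) ^ 2) - / p)
      | S _ =>
          let M := INR m in
          / 2 * / (1 - (1 - p) ^ (2 * m))
          + (/ 2 - / (2 * M)) * / (1 - (1 - p) ^ (2 * m - 1))
          - / (2 * M) * (sumR (map (fun k => / (1 - (1 - p) ^ k)) (seq 1 (2 * (m - 1))))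
                         + / p)
          + (M - 1) / M * Phi p m'
      end
  end.

(** * Value of the game: inf over searcher strategies of the max over
    hider edges of the expected traversal time. *)
Definition guarantees lam p (M : R) : Prop :=
  exists sg, valid_strategy lam sg /\
    forall e, In e (edges lam) -> exists E, exp_time lam p sg e E /\ E <= M.

Definition is_glb (E : R -> Prop) (v : R) : Prop :=
  (forall x, E x -> v <= x) /\ (forall y, (forall x, E x -> y <= x) -> y <= v).

Definition val (lam : list nat) (p : R) : R :=
  epsilon (inhabits 0) (is_glb (guarantees lam p)).

From Pilot Require Import Defs.
From Stdlib Require Import Reals List.
From Stdlib Require Import Lra Lia Bool FunctionalExtensionality ClassicalEpsilon.
Import ListNotations.
Open Scope R_scope.

(** 1. The uniform Eulerian strategy only looks at the searcher's position, her
       last move and the set of traversed edges.  Collapsing histories to such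
       states turns the partial sums of the tail probabilities P(T_e > t) into a
       recursion [tail_sum_st] driven by a one-stage expectation [step_exp].
    2. One stage averages over the 2^|E| activation patterns; [Eact] computes
       such averages edge by edge.  We evaluate the two kinds of stage: at a hub
       (O or D) the searcher leaves along an unused path chosen uniformly among
       the active ones ([Eact_pick]); inside a path she crosses one edge or waits.
    3. The reachable states are described by abstract phases (at a hub with a
       set of finished paths, or k edges into a path); we give an explicit value
       function [value] on phases and check that it satisfies the one-stage
       equations of both kinds ([value_hub_equation], [value_path_equation]).
    4. By well-founded induction on the number of untraversed edges, the partial
       tail sums converge to [value] ([tail_sum_converges]); at the start the
       value equals (theta + 1/p)/2 + Phi_m ([value_hub_start]).
    5. Guarding the strategy against illegal moves in unreachable histories gives
       a valid strategy with the same expected times, whence the bound on val. *)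

Lemma sumR_nil : sumR [] = 0. Proof. reflexivity. Qed.
Lemma sumR_cons a l : sumR (a :: l) = a + sumR l. Proof. reflexivity. Qed.
Lemma sumR_app l1 l2 : sumR (l1 ++ l2) = sumR l1 + sumR l2.
Proof. induction l1 as [|a l IH]; simpl app; rewrite ?sumR_cons, ?sumR_nil; [lra|rewrite IH; lra]. Qed.
Lemma sumR_map_ext {A} (f g : A -> R) l : (forall x, In x l -> f x = g x) -> sumR (map f l) = sumR (map g l).
Proof. intros H; induction l as [|a l IH]; simpl map; rewrite ?sumR_cons; auto.
  rewrite H by (left; auto). rewrite IH; auto. intros; apply H; right; auto. Qed.
Lemma sumR_map_plus {A} (f g : A -> R) l : sumR (map (fun x => f x + g x) l) = sumR (map f l) + sumR (map g l).
Proof. induction l as [|a l IH]; simpl map; rewrite ?sumR_cons, ?sumR_nil; [lra|rewrite IH; lra]. Qed.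
Lemma sumR_map_scal {A} c (f : A -> R) l : sumR (map (fun x => c * f x) l) = c * sumR (map f l).
Proof. induction l as [|a l IH]; simpl map; rewrite ?sumR_cons, ?sumR_nil; [lra|rewrite IH; lra]. Qed.
Lemma sumR_map_scalr {A} c (f : A -> R) l : sumR (map (fun x => f x * c) l) = sumR (map f l) * c.
Proof. induction l as [|a l IH]; simpl map; rewrite ?sumR_cons, ?sumR_nil; [lra|rewrite IH; lra]. Qed.
Lemma sumR_map_zero {A} (f : A -> R) l : (forall x, In x l -> f x = 0) -> sumR (map f l) = 0.
Proof. intros H. rewrite (sumR_map_ext f (fun _ => 0)) by auto.
  induction l; simpl map; rewrite ?sumR_cons, ?sumR_nil; auto. rewrite IHl; [lra|intros; apply H; right; auto]. Qed.
Lemma sumR_flat_map {A B} (f : B -> R) (g : A -> list B) l :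
  sumR (map f (flat_map g l)) = sumR (map (fun x => sumR (map f (g x))) l).
Proof. induction l as [|a l IH]; simpl; auto. rewrite map_app, sumR_app, IH. reflexivity. Qed.
Lemma sumR_const {A} (K : list A) c : sumR (map (fun _ => c) K) = INR (length K) * c.
Proof. induction K; simpl map. rewrite sumR_nil; simpl; ring. rewrite sumR_cons, IHK. simpl length. rewrite S_INR; ring. Qed.
Lemma sumR_filter {A} (F : A -> R) P l : sumR (map F (filter P l)) = sumR (map (fun x => if P x then F x else 0) l).
Proof. induction l; simpl; auto. destruct (P a); simpl map; rewrite ?sumR_cons, IHl; auto; ring. Qed.
Lemma sumR_nonneg {A} (f : A -> R) l : (forall x, In x l -> 0 <= f x) -> 0 <= sumR (map f l).
Proof. induction l; simpl map; intros H. rewrite sumR_nil; lra. rewrite sumR_cons.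
  pose proof (H a (or_introl eq_refl)). pose proof (IHl (fun x Hx => H x (or_intror Hx))). lra. Qed.

Lemma filter_flat_map {A B} (P : B -> bool) (g : A -> list B) l :
  filter P (flat_map g l) = flat_map (fun x => filter P (g x)) l.
Proof. induction l; simpl; auto. rewrite filter_app, IHl; auto. Qed.
Lemma filter_seq_eq (a : nat) n s : filter (fun j => (j =? a)%nat) (seq s n) = if (s <=? a)%nat && (a <? s + n)%nat then [a] else [].
Proof. revert s; induction n; intros s; cbn [seq filter].
  - destruct (s <=? a)%nat eqn:E1; destruct (a <? s + 0)%nat eqn:E2; auto.
    apply Nat.leb_le in E1; apply Nat.ltb_lt in E2; lia.
  - rewrite IHn. destruct (s =? a)%nat eqn:E.
    + apply Nat.eqb_eq in E; subst.
      replace (S a <=? a)%nat with false by (symmetry; apply Nat.leb_gt; lia).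
      replace (a <=? a)%nat with true by (symmetry; apply Nat.leb_le; lia).
      replace (a <? a + S n)%nat with true by (symmetry; apply Nat.ltb_lt; lia). auto.
    + apply Nat.eqb_neq in E.
      destruct (Nat.leb_spec s a), (Nat.leb_spec (S s) a), (Nat.ltb_spec a (S s + n)), (Nat.ltb_spec a (s + S n)); simpl; auto; lia. Qed.
Lemma flat_map_ext_in {A B} (g1 g2 : A -> list B) l : (forall x, In x l -> g1 x = g2 x) -> flat_map g1 l = flat_map g2 l.
Proof. induction l; simpl; intros H; auto. rewrite H, IHl; auto. Qed.
Lemma filter_false {A} (l : list A) : filter (fun _ => false) l = [].
Proof. induction l; simpl; auto. Qed.
Lemma filter_filter' {A} (f g : A -> bool) l : filter f (filter g l) = filter (fun x => g x && f x) l.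
Proof. induction l; simpl; auto. destruct (g a); simpl; auto. destruct (f a); simpl; rewrite IHl; auto. Qed.

Record sstate := mk_sstate { s_pos : vtx; s_last : option edge; s_trav : edge -> bool }.
Definition state_of lam (h : history) : sstate := mk_sstate (position lam h) (last_go h) (traversed h).
Definition advance lam (s : sstate) (mv : move) : sstate :=
  match mv with
  | Wait => s
  | Go e => mk_sstate (cross lam (s_pos s) e) (Some e) (fun f => s_trav s f || edge_eqb e f)
  end.

Lemma last_go_app h A mv : last_go (h ++ [(A, mv)]) =
  match mv with Go e => Some e | Wait => last_go h end.
Proof. induction h as [|a h IH]; simpl. destruct mv; reflexivity.
  rewrite IH. destruct mv; auto. Qed.

Lemma state_app lam h A mv : state_of lam (h ++ [(A, mv)]) = advance lam (state_of lam h) mv.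
Proof. unfold state_of, advance. rewrite last_go_app.
  assert (Hp : position lam (h ++ [(A, mv)]) = match mv with Wait => position lam h | Go e => cross lam (position lam h) e end).
  { unfold position. rewrite fold_left_app. reflexivity. }
  assert (Ht : traversed (h ++ [(A, mv)]) = fun f => traversed h f || match mv with Go g => edge_eqb g f | Wait => false end).
  { apply functional_extensionality; intro f. unfold traversed. rewrite existsb_app. simpl. rewrite orb_false_r. reflexivity. }
  rewrite Hp, Ht. destruct mv; simpl; auto. f_equal. apply functional_extensionality; intro; apply orb_false_r. Qed.

Definition sstrategy := sstate -> list edge -> list (R * move).

Definition step_exp lam p (sg : sstrategy) (G : sstate -> R) (s : sstate) : R :=
  sumR (map (fun aw => snd aw * sumR (map (fun wm => fst wm * G (advance lam s (snd wm))) (sg s (fst aw))))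
    (patterns p (edges lam))).

Fixpoint tail_st lam p sg e t s : R :=
  match t with O => if s_trav s e then 0 else 1 | S t' => step_exp lam p sg (tail_st lam p sg e t') s end.
Fixpoint tail_sum_st lam p sg e N s : R :=
  match N with O => 0 | S N' => tail_sum_st lam p sg e N' s + tail_st lam p sg e N' s end.

Lemma step_exp_ext_strategy lam p sg1 sg2 G s : (forall A, sg1 s A = sg2 s A) ->
  step_exp lam p sg1 G s = step_exp lam p sg2 G s.
Proof. intros H. unfold step_exp. apply sumR_map_ext; intros aw _. rewrite H; auto. Qed.
Lemma step_exp_plus lam p sg G1 G2 s :
  step_exp lam p sg (fun x => G1 x + G2 x) s = step_exp lam p sg G1 s + step_exp lam p sg G2 s.
Proof. unfold step_exp. rewrite <- sumR_map_plus. apply sumR_map_ext; intros aw _.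
  rewrite <- Rmult_plus_distr_l, <- sumR_map_plus. f_equal. apply sumR_map_ext; intros; ring. Qed.
Lemma step_exp_zero lam p sg G s : (forall mv, G (advance lam s mv) = 0) -> step_exp lam p sg G s = 0.
Proof. intros H. unfold step_exp. apply sumR_map_zero; intros aw _.
  rewrite sumR_map_zero; [ring|]. intros wm _; rewrite H; ring. Qed.

(** Once [e] is traversed it stays traversed, so all later tails vanish. *)
Lemma advance_trav lam s mv e : s_trav s e = true -> s_trav (advance lam s mv) e = true.
Proof. intros H; destruct mv; simpl; auto. rewrite H; auto. Qed.
Lemma tail_st_traversed lam p sg e t : forall s, s_trav s e = true -> tail_st lam p sg e t s = 0.
Proof. induction t; intros s H; simpl. rewrite H; auto.
  apply step_exp_zero. intros mv; apply IHt, advance_trav, H. Qed.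
Lemma tail_sum_st_traversed lam p sg e N s : s_trav s e = true -> tail_sum_st lam p sg e N s = 0.
Proof. intros H; induction N; simpl; auto. rewrite IHN, tail_st_traversed; auto; ring. Qed.

Lemma tail_sum_st_S lam p sg e N : forall s, tail_sum_st lam p sg e (S N) s =
  (if s_trav s e then 0 else 1) + step_exp lam p sg (tail_sum_st lam p sg e N) s.
Proof. induction N; intros s.
  - simpl. rewrite step_exp_zero by (intros; reflexivity). ring.
  - change (tail_sum_st lam p sg e (S (S N)) s) with (tail_sum_st lam p sg e (S N) s + tail_st lam p sg e (S N) s).
    rewrite IHN. simpl tail_st. rewrite Rplus_assoc, <- step_exp_plus. f_equal. Qed.

Definition step_hist lam p (sg : strategy) (G : history -> R) (h : history) : R :=
  sumR (map (fun aw => snd aw * sumR (map (fun wm => fst wm * G (h ++ [(fst aw, snd wm)])) (sg h (fst aw))))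
    (patterns p (edges lam))).
Fixpoint iter_hist lam p sg t (G : history -> R) : history -> R :=
  match t with O => G | S t' => iter_hist lam p sg t' (step_hist lam p sg G) end.

Lemma dist_S_expectation lam p sg t G :
  sumR (map (fun hw => snd hw * G (fst hw)) (Defs.dist lam p sg (S t))) =
  sumR (map (fun hw => snd hw * step_hist lam p sg G (fst hw)) (Defs.dist lam p sg t)).
Proof. simpl Defs.dist. rewrite sumR_flat_map. apply sumR_map_ext; intros hw _.
  unfold step_hist. rewrite sumR_flat_map, <- sumR_map_scal. apply sumR_map_ext; intros aw _.
  rewrite map_map, <- Rmult_assoc, <- sumR_map_scal. apply sumR_map_ext; intros wm _. simpl. rewrite Rmult_assoc. reflexivity. Qed.

Lemma dist_expectation lam p sg t : forall G,
  sumR (map (fun hw => snd hw * G (fst hw)) (Defs.dist lam p sg t)) = iter_hist lam p sg t G [].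
Proof. induction t; intros G. simpl. unfold sumR; simpl. ring.
  rewrite dist_S_expectation, IHt. reflexivity. Qed.

Lemma iter_step_hist lam p sg t : forall G h,
  iter_hist lam p sg t (step_hist lam p sg G) h = step_hist lam p sg (iter_hist lam p sg t G) h.
Proof. induction t; intros G h; simpl; auto. Qed.

Lemma iter_hist_tail lam p (sg : strategy) (ss : sstrategy) e :
  (forall h A, sg h A = ss (state_of lam h) A) ->
  forall t h, iter_hist lam p sg t (fun h => if traversed h e then 0 else 1) h = tail_st lam p ss e t (state_of lam h).
Proof. intros Hs t; induction t; intros h. reflexivity.
  change (iter_hist lam p sg (S t) ?G h) with (iter_hist lam p sg t (step_hist lam p sg G) h).
  rewrite iter_step_hist. unfold step_hist. simpl tail_st. unfold step_exp. apply sumR_map_ext; intros aw _.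
  rewrite Hs. f_equal. apply sumR_map_ext; intros wm _. rewrite IHt, state_app. reflexivity. Qed.

Lemma tail_as_tail_st lam p (sg : strategy) (ss : sstrategy) e :
  (forall h A, sg h A = ss (state_of lam h) A) ->
  forall t, Defs.tail lam p sg e t = tail_st lam p ss e t (state_of lam []).
Proof. intros Hs t. unfold Defs.tail. rewrite <- (iter_hist_tail lam p sg ss e Hs t []). rewrite <- dist_expectation.
  apply sumR_map_ext; intros hw _. destruct (traversed (fst hw) e); ring. Qed.

Lemma partial_tails_as_tail_sum_st lam p (sg : strategy) (ss : sstrategy) e :
  (forall h A, sg h A = ss (state_of lam h) A) ->
  forall N, sum_f_R0 (Defs.tail lam p sg e) N = tail_sum_st lam p ss e (S N) (state_of lam []).
Proof. intros Hs N; induction N; simpl sum_f_R0; simpl tail_sum_st; rewrite (tail_as_tail_st _ _ _ ss) by auto.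
  - rewrite Rplus_0_l. reflexivity.
  - rewrite IHN. reflexivity. Qed.

Lemma edge_eqb_spec x y : edge_eqb x y = true <-> x = y.
Proof. destruct x as [a b], y as [c d]; unfold edge_eqb; simpl.
  rewrite andb_true_iff, !Nat.eqb_eq. split; [intros [-> ->]; auto | intros H; inversion H; auto]. Qed.
Lemma edge_eqb_refl x : edge_eqb x x = true. Proof. apply edge_eqb_spec; auto. Qed.
Lemma edge_eqb_neq x y : x <> y -> edge_eqb x y = false.
Proof. intros H. destruct (edge_eqb x y) eqn:E; auto. apply edge_eqb_spec in E; contradiction. Qed.
Lemma edge_eq_dec (x y : edge) : {x = y} + {x <> y}.
Proof. decide equality; apply Nat.eq_dec. Qed.
Lemma memb_In e l : memb e l = true <-> In e l.
Proof. unfold memb. rewrite existsb_exists. split.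
  - intros [x [Hx He]]. apply edge_eqb_spec in He; subst; auto.
  - intros H; exists e; split; auto; apply edge_eqb_refl. Qed.

(** [Eact p L s F] is the expectation of [F (s ∪ A)], where every edge of [L]
    belongs to the random set [A] independently with probability [p]. *)
Definition activate (s : edge -> bool) (e : edge) : edge -> bool := fun x => edge_eqb x e || s x.
Fixpoint Eact (p : R) (L : list edge) (s : edge -> bool) (F : (edge -> bool) -> R) : R :=
  match L with
  | [] => F s
  | e :: L' => p * Eact p L' (activate s e) F + (1 - p) * Eact p L' s F
  end.

Lemma patterns_expectation p L : forall s F,
  sumR (map (fun aw => snd aw * F (fun x => memb x (fst aw) || s x)) (patterns p L)) = Eact p L s F.
Proof. induction L as [|e L IH]; intros s F; simpl.
  - unfold sumR; simpl. rewrite Rmult_1_l, Rplus_0_r. reflexivity.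
  - rewrite map_app, sumR_app, !map_map. simpl. rewrite <- IH, <- IH.
    rewrite <- !sumR_map_scal. f_equal; apply sumR_map_ext; intros aw _.
    + rewrite Rmult_assoc. f_equal. f_equal. f_equal.
      apply functional_extensionality; intros x. unfold activate, memb. simpl.
      destruct (edge_eqb x e), (existsb (edge_eqb x) (fst aw)), (s x); auto.
    + ring. Qed.

Lemma Eact_ext p L : forall s F F', (forall s', (forall x, ~ In x L -> s' x = s x) -> F s' = F' s') ->
  Eact p L s F = Eact p L s F'.
Proof. induction L as [|e L IH]; intros s F F' H; simpl. apply H; auto.
  f_equal; f_equal; apply IH; intros s' Hs'; apply H; intros x Hx.
  - rewrite Hs' by (intro; apply Hx; right; auto). unfold activate.
    rewrite edge_eqb_neq; auto. intro; apply Hx; left; auto.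
  - apply Hs'. intro; apply Hx; right; auto. Qed.
Lemma Eact_ext_pointwise p L s F F' : (forall s', F s' = F' s') -> Eact p L s F = Eact p L s F'.
Proof. intros H; apply Eact_ext; auto. Qed.
Lemma Eact_const p L : forall s c, Eact p L s (fun _ => c) = c.
Proof. induction L; intros; simpl; auto. rewrite !IHL; ring. Qed.
Lemma Eact_plus p L : forall s F G, Eact p L s (fun x => F x + G x) = Eact p L s F + Eact p L s G.
Proof. induction L; intros; simpl; auto. rewrite !IHL; ring. Qed.
Lemma Eact_scal p L : forall s c F, Eact p L s (fun x => c * F x) = c * Eact p L s F.
Proof. induction L; intros; simpl; auto. rewrite !IHL; ring. Qed.
Lemma Eact_sumR {A} p L s (phi : A -> (edge -> bool) -> R) K :
  Eact p L s (fun x => sumR (map (fun f => phi f x) K)) = sumR (map (fun f => Eact p L s (phi f)) K).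
Proof. induction K as [|a K IH]; simpl map. rewrite sumR_nil; apply Eact_const.
  rewrite sumR_cons. rewrite (Eact_ext_pointwise p L s _ (fun x => phi a x + sumR (map (fun f => phi f x) K))).
  rewrite Eact_plus, IH. reflexivity. intros; rewrite sumR_cons; auto. Qed.

Definition count_in (K : list edge) (s : edge -> bool) : nat := length (filter s K).
Lemma count_in_cons k K s : count_in (k :: K) s = ((if s k then 1 else 0) + count_in K s)%nat.
Proof. unfold count_in; simpl; destruct (s k); auto. Qed.
Lemma count_in_split K1 k K2 s : count_in (K1 ++ k :: K2) s = ((if s k then 1 else 0) + count_in (K1 ++ K2) s)%nat.
Proof. unfold count_in. rewrite !filter_app, !length_app. simpl. destruct (s k); simpl; lia. Qed.
Lemma count_in_zero K s : count_in K s = 0%nat -> forall f, In f K -> s f = false.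
Proof. unfold count_in; intros H f Hf. destruct (s f) eqn:E; auto.
  assert (In f (filter s K)) by (apply filter_In; auto). destruct (filter s K); [contradiction|discriminate]. Qed.
Lemma sumR_indicator (K : list edge) (s : edge -> bool) (a : R) :
  sumR (map (fun f => if s f then a else 0) K) = INR (count_in K s) * a.
Proof. induction K as [|k K IH]; simpl map. rewrite sumR_nil; simpl; ring.
  rewrite sumR_cons, IH, count_in_cons. destruct (s k); simpl plus; [rewrite S_INR|]; ring. Qed.

(** [Ebin p n h] is the expectation of [h X] for X ~ Binomial(n, p). *)
Fixpoint Ebin (p : R) (n : nat) (h : nat -> R) : R :=
  match n with O => h O | S n' => p * Ebin p n' (fun k => h (S k)) + (1 - p) * Ebin p n' h end.
Lemma Ebin_ext p n : forall h h', (forall k, h k = h' k) -> Ebin p n h = Ebin p n h'.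
Proof. induction n; intros h h' H; simpl; auto. rewrite (IHn _ (fun k => h' (S k))), (IHn h h'); auto. Qed.
Lemma Ebin_const p n : forall c, Ebin p n (fun _ => c) = c.
Proof. induction n; intros; simpl; auto. rewrite !IHn; ring. Qed.
Lemma Ebin_none p n : Ebin p n (fun k => if (k =? 0)%nat then 1 else 0) = (1 - p) ^ n.
Proof. induction n; simpl; auto. rewrite Ebin_const, IHn. ring. Qed.
Lemma Ebin_some p n : Ebin p n (fun k => if (k =? 0)%nat then 0 else 1) = 1 - (1 - p) ^ n.
Proof. induction n; simpl; [ring|]. rewrite Ebin_const, IHn. ring. Qed.

Lemma remove_head_edge (k : edge) K1 K2 L (s : edge -> bool) :
  NoDup (k :: L) -> NoDup (K1 ++ k :: K2) -> incl (K1 ++ k :: K2) (k :: L) ->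
  (forall x, In x (K1 ++ k :: K2) -> s x = false) ->
  NoDup (K1 ++ K2) /\ incl (K1 ++ K2) L /\ s k = false /\
  (forall x, In x (K1 ++ K2) -> s x = false) /\ (forall x, In x (K1 ++ K2) -> activate s k x = false).
Proof. intros HL HK Hinc Hs.
  assert (Hin : forall x, In x (K1 ++ K2) -> In x (K1 ++ k :: K2)).
  { intros x Hx; apply in_app_or in Hx; apply in_or_app; destruct Hx; [left|right; right]; auto. }
  assert (HkK : ~ In k (K1 ++ K2)) by (eapply NoDup_remove_2; eauto).
  assert (Hs' : forall x, In x (K1 ++ K2) -> s x = false) by auto.
  repeat split; auto.
  - eapply NoDup_remove_1; eauto.
  - intros x Hx. destruct (Hinc x (Hin x Hx)); subst; [contradiction|auto].
  - apply Hs, in_or_app; right; left; auto.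
  - intros x Hx; unfold activate. rewrite edge_eqb_neq, Hs'; auto. intro; subst; contradiction. Qed.

Lemma incl_tl_neq (k : edge) K L : incl K (k :: L) -> ~ In k K -> incl K L.
Proof. intros H Hk x Hx. destruct (H x Hx); subst; auto. contradiction. Qed.

Lemma Eact_count p L : forall s K h, NoDup L -> NoDup K -> incl K L -> (forall x, In x K -> s x = false) ->
  Eact p L s (fun s' => h (count_in K s')) = Ebin p (length K) h.
Proof. induction L as [|k L IH]; intros s K h HL HK Hinc Hs.
  - destruct K as [|a K]. reflexivity. exfalso; apply (Hinc a); left; auto.
  - inversion HL as [|k' L' HkL HL']; subst. simpl Eact.
    destruct (in_dec edge_eq_dec k K) as [Hin|Hnin].
    + destruct (in_split _ _ Hin) as [K1 [K2 ->]].
      destruct (remove_head_edge k K1 K2 L s HL HK Hinc Hs) as (HK' & Hinc' & Hsk & Hs' & Hs1).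
      rewrite length_app; simpl; rewrite Nat.add_succ_r, <- length_app. simpl Ebin.
      rewrite (Eact_ext p L _ _ (fun s' => (fun n => h (S n)) (count_in (K1 ++ K2) s'))).
      rewrite (Eact_ext p L s _ (fun s' => h (count_in (K1 ++ K2) s'))).
      rewrite <- (IH (activate s k) (K1++K2) (fun n => h (S n))), <- (IH s (K1 ++ K2) h); auto.
      * intros s' Hs''. rewrite count_in_split, Hs'', Hsk; auto.
      * intros s' Hs''. rewrite count_in_split, Hs''; auto. unfold activate. rewrite edge_eqb_refl. reflexivity.
    + assert (Hinc' : incl K L) by (eapply incl_tl_neq; eauto).
      rewrite !IH; auto. ring.
      intros x Hx; unfold activate. rewrite edge_eqb_neq, Hs; auto. intro; subst; contradiction. Qed.

(** Expected share of a fresh edge [f] of [K] when the weight [1/(c + #active)]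
    goes to each active edge: f must be active, and the others are binomial. *)
Lemma Eact_share p L : forall s K c f, NoDup L -> NoDup K -> incl K L -> (forall x, In x K -> s x = false) -> In f K ->
  Eact p L s (fun s' => if s' f then / (c + INR (count_in K s')) else 0) =
  p * Ebin p (pred (length K)) (fun n => / (c + 1 + INR n)).
Proof. induction L as [|k L IH]; intros s K c f HL HK Hinc Hs Hf.
  - exfalso; apply (Hinc f); auto.
  - inversion HL as [|k' L' HkL HL']; subst. simpl Eact.
    destruct (in_dec edge_eq_dec k K) as [Hin|Hnin].
    + destruct (in_split _ _ Hin) as [K1 [K2 ->]].
      destruct (remove_head_edge k K1 K2 L s HL HK Hinc Hs) as (HK' & Hinc' & Hsk & Hs' & Hs1).
      rewrite length_app; simpl; rewrite Nat.add_succ_r, <- length_app, Nat.pred_succ.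
      destruct (edge_eq_dec f k) as [->|Hfk].
      * rewrite (Eact_ext p L _ _ (fun s' => (fun n => / (c + 1 + INR n)) (count_in (K1 ++ K2) s'))).
        rewrite (Eact_ext p L s _ (fun _ => 0)).
        rewrite <- (Eact_count p L (activate s k) (K1 ++ K2) (fun n => / (c + 1 + INR n))), Eact_const; auto.
        rewrite Rmult_0_r, Rplus_0_r. reflexivity.
        -- intros s' Hs''. rewrite Hs''; auto. rewrite Hsk; auto.
        -- intros s' Hs''. rewrite Hs''; auto. unfold activate; rewrite edge_eqb_refl. simpl.
           rewrite count_in_split, Hs'' by auto. unfold activate; rewrite edge_eqb_refl, orb_true_l.
           change ((1 + ?n)%nat) with (S n). rewrite S_INR. f_equal. ring.
      * assert (Hf' : In f (K1 ++ K2)).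
        { apply in_app_or in Hf; apply in_or_app; destruct Hf as [H|[H|H]]; auto. subst; contradiction. }
        rewrite (Eact_ext p L _ _ (fun s' => if s' f then / ((c + 1) + INR (count_in (K1 ++ K2) s')) else 0)).
        rewrite (Eact_ext p L s _ (fun s' => if s' f then / (c + INR (count_in (K1 ++ K2) s')) else 0)).
        rewrite IH, IH; auto.
        destruct (length (K1 ++ K2)) as [|n] eqn:Hn.
        { destruct (K1 ++ K2); [contradiction|discriminate]. }
        simpl pred. cbn [Ebin].
        rewrite (Ebin_ext p n (fun k0 => / (c + 1 + INR (S k0))) (fun n0 => / (c + 1 + 1 + INR n0))). ring.
        intros; rewrite S_INR; f_equal; ring.
        -- intros s' Hs''. rewrite count_in_split, (Hs'' k), Hsk by auto. reflexivity.
        -- intros s' Hs''. rewrite count_in_split, (Hs'' k) by auto. unfold activate; rewrite edge_eqb_refl, orb_true_l.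
           change ((1 + ?n)%nat) with (S n). rewrite S_INR. destruct (s' f); auto. f_equal. ring.
    + assert (Hinc' : incl K L) by (eapply incl_tl_neq; eauto).
      rewrite !IH; auto. ring.
      intros x Hx; unfold activate. rewrite edge_eqb_neq, Hs; auto. intro; subst; contradiction. Qed.

(** Probability that a given fresh edge of [K] is the one picked, when one
    active edge of [K] is chosen uniformly at random. *)
Definition pick_prob p (K : list edge) : R := p * Ebin p (pred (length K)) (fun n => / (0 + 1 + INR n)).

(** Summing over [K]: some edge of [K] is picked iff one of them is active. *)
Lemma pick_prob_total p L s K : NoDup L -> NoDup K -> incl K L -> (forall x, In x K -> s x = false) -> K <> [] ->
  INR (length K) * pick_prob p K = 1 - (1 - p) ^ length K.
Proof. intros HL HK Hinc Hs Hne.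
  assert (H1 : Eact p L s (fun s' => sumR (map (fun f => if s' f then / (0 + INR (count_in K s')) else 0) K)) =
               INR (length K) * pick_prob p K).
  { rewrite Eact_sumR. rewrite (sumR_map_ext _ (fun _ => pick_prob p K)). apply sumR_const.
    intros f Hf. unfold pick_prob. apply Eact_share; auto. }
  rewrite <- H1. rewrite (Eact_ext_pointwise p L s _ (fun s' => (fun n => if (n =? 0)%nat then 0 else 1) (count_in K s'))).
  rewrite <- (Ebin_some p (length K)). apply (Eact_count p L s K (fun n => if (n =? 0)%nat then 0 else 1)); auto.
  intros s'. rewrite sumR_indicator. destruct (count_in K s') eqn:E. simpl. ring.
  change (S n =? 0)%nat with false. cbv iota. rewrite Rplus_0_l. field.
  apply not_0_INR; discriminate. Qed.

Lemma Eact_single p L s f x y : NoDup L -> In f L -> s f = false ->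
  Eact p L s (fun s' => if s' f then x else y) = p * x + (1 - p) * y.
Proof. intros HL Hf Hs.
  rewrite (Eact_ext_pointwise p L s _ (fun s' => (fun n => if (n =? 0)%nat then y else x) (count_in [f] s'))).
  rewrite (Eact_count p L s [f] (fun n => if (n =? 0)%nat then y else x)); auto; try (simpl; ring).
  constructor; auto; constructor.
  intros z [<-|[]]; auto. intros z [<-|[]]; auto.
  intros s'. unfold count_in; simpl. destruct (s' f); auto. Qed.

Lemma Eact_pick p L s K a (b : edge -> R) : NoDup L -> NoDup K -> incl K L -> (forall x, In x K -> s x = false) -> K <> [] ->
  Eact p L s (fun s' => if (count_in K s' =? 0)%nat then a else
     sumR (map (fun f => (if s' f then / INR (count_in K s') else 0) * b f) K)) =
  (1 - p) ^ length K * a + pick_prob p K * sumR (map b K).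
Proof. intros HL HK Hinc Hs Hne.
  rewrite (Eact_ext_pointwise p L s _ (fun s' => a * (fun n => if (n =? 0)%nat then 1 else 0) (count_in K s') +
     sumR (map (fun f => b f * (if s' f then / (0 + INR (count_in K s')) else 0)) K))).
  - rewrite Eact_plus, Eact_scal, (Eact_count p L s K (fun n => if (n =? 0)%nat then 1 else 0)), Ebin_none, Eact_sumR; auto.
    rewrite (sumR_map_ext _ (fun f => b f * pick_prob p K)). rewrite sumR_map_scalr. ring.
    intros f Hf. rewrite Eact_scal. unfold pick_prob. rewrite Eact_share; auto.
  - intros s'. destruct (count_in K s') eqn:E.
    + simpl. rewrite sumR_map_zero. ring. intros f Hf. rewrite (count_in_zero K s' E f Hf). ring.
    + change (S n =? 0)%nat with false. cbv iota. rewrite Rmult_0_r, Rplus_0_l. apply sumR_map_ext. intros f _. rewrite Rplus_0_l. ring. Qed.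

Lemma In_edges lam i j : In (i, j) (edges lam) <-> (i < length lam)%nat /\ (j < len lam i)%nat.
Proof. unfold edges. rewrite in_flat_map. split.
  - intros [x [Hx Hy]]. apply in_map_iff in Hy. destruct Hy as [y [Hy Hy']]. inversion Hy; subst.
    apply in_seq in Hx, Hy'. lia.
  - intros [H1 H2]. exists i. split. apply in_seq; lia. apply in_map_iff. exists j; split; auto. apply in_seq; lia. Qed.

Lemma NoDup_edges lam : NoDup (edges lam).
Proof. unfold edges. generalize (seq_NoDup (length lam) 0). generalize (seq 0 (length lam)).
  induction l as [|x l IH]; intros Hl; simpl. constructor.
  inversion Hl; subst. apply NoDup_app; auto.
  - apply NoDup_map_NoDup_ForallPairs. intros a b _ _ H; inversion H; auto. apply seq_NoDup.
  - intros a Ha Hb. apply in_map_iff in Ha. destruct Ha as [j [<- _]].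
    apply in_flat_map in Hb. destruct Hb as [y [Hy Hb]]. apply in_map_iff in Hb. destruct Hb as [j' [Hj _]].
    inversion Hj; subst. contradiction. Qed.

Lemma vtx_eqb_spec u v : vtx_eqb u v = true <-> u = v.
Proof. destruct u, v; simpl; split; intros H; try discriminate; try congruence; auto.
  apply andb_true_iff in H. destruct H as [H1 H2]. apply Nat.eqb_eq in H1, H2. subst; auto.
  inversion H; subst. rewrite !Nat.eqb_refl; auto. Qed.
Lemma vtx_eqb_refl u : vtx_eqb u u = true. Proof. apply vtx_eqb_spec; auto. Qed.

Lemma pt_len lam i : (0 < len lam i)%nat -> pt lam i (len lam i) = VD.
Proof. intros H. unfold pt. destruct (len lam i); [lia|]. simpl. rewrite Nat.eqb_refl; auto. Qed.
Lemma pt_mid lam i j : (0 < j)%nat -> (j < len lam i)%nat -> pt lam i j = VI i j.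
Proof. intros H1 H2. unfold pt. destruct (j =? 0)%nat eqn:E0. apply Nat.eqb_eq in E0; lia.
  destruct (j =? len lam i)%nat eqn:E; auto. apply Nat.eqb_eq in E; lia. Qed.

Lemma pt_S lam i j : pt lam i (S j) = if (S j =? len lam i)%nat then VD else VI i (S j).
Proof. reflexivity. Qed.
Lemma incident_O lam i j : incident lam VO (i, j) = (j =? 0)%nat.
Proof. unfold incident, src, tgt; simpl fst; simpl snd. rewrite pt_S.
  destruct j. reflexivity. rewrite pt_S.
  destruct (S j =? len lam i)%nat, (S (S j) =? len lam i)%nat; reflexivity. Qed.
Lemma incident_D lam i j : (j < len lam i)%nat -> incident lam VD (i, j) = (S j =? len lam i)%nat.
Proof. intros H. unfold incident, src, tgt; simpl fst; simpl snd. rewrite pt_S.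
  destruct j. destruct (1 =? len lam i)%nat; reflexivity. rewrite pt_S.
  destruct (S j =? len lam i)%nat eqn:E. apply Nat.eqb_eq in E; lia.
  destruct (S (S j) =? len lam i)%nat; reflexivity. Qed.

Lemma cross_src lam v e : vtx_eqb v (src lam e) = true -> cross lam v e = tgt lam e.
Proof. intros H; unfold cross; rewrite H; auto. Qed.
Lemma cross_tgt lam v e : vtx_eqb v (src lam e) = false -> vtx_eqb v (tgt lam e) = true -> cross lam v e = src lam e.
Proof. intros H1 H2; unfold cross; rewrite H1, H2; auto. Qed.

Definition ue_st lam : sstrategy := fun s A =>
  match s_pos s with
  | VI i j =>
      let ne : edge :=
        match s_last s with
        | Some (_, l) => if Nat.eqb l j then (i, Nat.pred j) else (i, j)
        | None => (i, j)
        end in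
      if memb ne A then [(1, Go ne)] else [(1, Wait)]
  | v =>
      let c := filter (fun e => incident lam v e && memb e A && negb (s_trav s e)) (edges lam) in
      match c with
      | [] => [(1, Wait)]
      | _ => map (fun e => (/ INR (length c), Go e)) c
      end
  end.
Lemma uniform_eulerian_state lam h A : uniform_eulerian lam h A = ue_st lam (state_of lam h) A.
Proof. reflexivity. Qed.

(** At the hub O ([v = true]) or D ([v = false]) with finished paths [dn], the
    strategy may leave along the exits, i.e. the end edges of unfinished paths. *)
Definition exit_index lam (v : bool) (i : nat) : nat := if v then 0%nat else (len lam i - 1)%nat.
Definition exits lam (v : bool) (dn : nat -> bool) : list edge :=
  flat_map (fun i => if dn i then [] else [(i, exit_index lam v i)]) (seq 0 (length lam)).
Definition pos_lengths lam := forall i, (i < length lam)%nat -> (0 < len lam i)%nat.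
Definition mark_done (dn : nat -> bool) (l : nat) : nat -> bool := fun x => (x =? l)%nat || dn x.

(** Reachable situations: at a hub with a set [dn] of finished paths, or [k]
    edges into path [c] having left the hub [v].  [represents] links a concrete
    state to its phase. *)
Inductive phase := AtHub (v : bool) (dn : nat -> bool) | OnPath (v : bool) (dn : nat -> bool) (c k : nat).

Definition represents lam (s : sstate) (a : phase) : Prop :=
  match a with
  | AtHub v dn => s_pos s = (if v then VO else VD) /\ forall f, In f (edges lam) -> s_trav s f = dn (fst f)
  | OnPath v dn c k => (c < length lam)%nat /\ dn c = false /\ (1 <= k < len lam c)%nat /\
      s_pos s = VI c (if v then k else len lam c - k) /\
      s_last s = Some (c, if v then (k - 1)%nat else (len lam c - k)%nat) /\
      forall f, In f (edges lam) -> s_trav s f = dn (fst f) || ((fst f =? c)%nat && (if v then (snd f <? k)%nat else (len lam c - k <=? snd f)%nat))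
  end.

Definition enter_path lam (v : bool) (dn : nat -> bool) (l : nat) : phase := if (1 <? len lam l)%nat then OnPath v dn l 1 else AtHub (negb v) (mark_done dn l).
Definition step_path lam (v : bool) (dn : nat -> bool) (c k : nat) : phase := if (S k <? len lam c)%nat then OnPath v dn c (S k) else AtHub (negb v) (mark_done dn c).
Definition path_edge lam (v : bool) (c k : nat) : edge := (c, if v then k else (len lam c - k - 1)%nat).

Lemma exits_filter lam s v dn : pos_lengths lam -> represents lam s (AtHub v dn) ->
  filter (fun f => incident lam (if v then VO else VD) f && negb (s_trav s f)) (edges lam) = exits lam v dn.
Proof. intros Hl [_ Htr].
  rewrite (filter_ext_in _ (fun f => incident lam (if v then VO else VD) f && negb (dn (fst f)))).
  2:{ intros f Hf; rewrite Htr; auto. }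
  unfold edges, exits. rewrite filter_flat_map. apply flat_map_ext_in. intros i Hi. apply in_seq in Hi.
  assert (Hli := Hl i ltac:(lia)).
  rewrite filter_map_swap. simpl fst.
  destruct (dn i); simpl negb.
  - rewrite (filter_ext _ (fun _ => false)). rewrite filter_false; auto. intros; apply andb_false_r.
  - rewrite (filter_ext_in _ (fun j => (j =? exit_index lam v i)%nat)).
    + rewrite filter_seq_eq. unfold exit_index. destruct v; simpl.
      * replace (0 <? len lam i)%nat with true by (symmetry; apply Nat.ltb_lt; lia). auto.
      * replace (len lam i - 1 <? len lam i)%nat with true by (symmetry; apply Nat.ltb_lt; lia). auto.
    + intros j Hj. apply in_seq in Hj. rewrite andb_true_r. unfold exit_index. destruct v.
      * apply incident_O.
      * rewrite incident_D by lia. destruct (Nat.eqb_spec (S j) (len lam i)), (Nat.eqb_spec j (len lam i - 1)); auto; lia. Qed.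

Lemma ue_st_hub lam s v dn A : pos_lengths lam -> represents lam s (AtHub v dn) ->
  ue_st lam s A = let c := filter (fun f => memb f A) (exits lam v dn) in
    match c with [] => [(1, Wait)] | _ => map (fun e => (/ INR (length c), Go e)) c end.
Proof. intros Hl Hr. unfold ue_st. pose proof Hr as [Hp _]. rewrite Hp.
  assert (H : filter (fun e => incident lam (if v then VO else VD) e && memb e A && negb (s_trav s e)) (edges lam) =
              filter (fun f => memb f A) (exits lam v dn)).
  { rewrite <- (exits_filter lam s v dn Hl Hr), filter_filter'. apply filter_ext. intros f.
    destruct (incident _ _ f), (memb f A), (s_trav s f); auto. }
  destruct v; simpl; rewrite H; reflexivity. Qed.

Lemma In_exits lam v dn f : In f (exits lam v dn) <-> exists i, (i < length lam)%nat /\ dn i = false /\ f = (i, exit_index lam v i).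
Proof. unfold exits. rewrite in_flat_map. split.
  - intros [i [Hi Hf]]. apply in_seq in Hi. destruct (dn i) eqn:E; [destruct Hf|]. destruct Hf as [<-|[]].
    exists i; repeat split; auto; lia.
  - intros [i [Hi [Hd ->]]]. exists i. split. apply in_seq; lia. rewrite Hd; left; auto. Qed.

Lemma NoDup_exits lam v dn : NoDup (exits lam v dn).
Proof. unfold exits. generalize (seq_NoDup (length lam) 0). generalize (seq 0 (length lam)).
  induction l as [|x l IH]; intros Hl; simpl. constructor.
  inversion Hl; subst. destruct (dn x); simpl; auto. constructor; auto.
  intros Hin. apply in_flat_map in Hin. destruct Hin as [y [Hy Hb]]. destruct (dn y); [destruct Hb|].
  destruct Hb as [Hb|[]]. inversion Hb; subst; contradiction. Qed.

Lemma incl_exits lam v dn : pos_lengths lam -> incl (exits lam v dn) (edges lam).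
Proof. intros Hl f Hf. apply In_exits in Hf. destruct Hf as [i [Hi [_ ->]]]. apply In_edges.
  specialize (Hl i Hi). unfold exit_index; destruct v; lia. Qed.

Lemma step_exp_hub lam p G s v dn : pos_lengths lam -> represents lam s (AtHub v dn) -> exits lam v dn <> [] ->
  step_exp lam p (ue_st lam) G s = (1 - p) ^ length (exits lam v dn) * G s +
     pick_prob p (exits lam v dn) * sumR (map (fun f => G (advance lam s (Go f))) (exits lam v dn)).
Proof. intros Hl Hr Hne. set (K := exits lam v dn).
  set (F := fun sg : edge -> bool => if (count_in K sg =? 0)%nat then G s else
     sumR (map (fun f => (if sg f then / INR (count_in K sg) else 0) * G (advance lam s (Go f))) K)).
  transitivity (Eact p (edges lam) (fun _ => false) F).
  - unfold step_exp. rewrite <- patterns_expectation. apply sumR_map_ext; intros aw _. f_equal.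
    unfold F. cbv beta. rewrite (ue_st_hub lam s v dn (fst aw) Hl Hr). cbv zeta.
    assert (Hc : filter (fun x => memb x (fst aw) || false) K = filter (fun f => memb f (fst aw)) K).
    { apply filter_ext; intros; apply orb_false_r. }
    unfold count_in. rewrite Hc. fold K.
    destruct (filter (fun f => memb f (fst aw)) K) as [|x c] eqn:E.
    + simpl. unfold sumR; simpl. ring.
    + change (length (x :: c) =? 0)%nat with false. cbv iota. rewrite <- E. rewrite map_map. cbn [fst snd].
      rewrite sumR_filter. apply sumR_map_ext; intros f _. rewrite orb_false_r.
      destruct (memb f (fst aw)); ring.
  - unfold F. apply Eact_pick; auto. apply NoDup_edges. apply NoDup_exits. apply incl_exits; auto. Qed.

Ltac bnat := repeat match goal with
  | |- context [Nat.eqb ?a ?b] => destruct (Nat.eqb_spec a b)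
  | |- context [Nat.ltb ?a ?b] => destruct (Nat.ltb_spec a b)
  | |- context [Nat.leb ?a ?b] => destruct (Nat.leb_spec a b)
  end; try subst; rewrite ?orb_false_r, ?orb_true_r, ?andb_true_r, ?andb_false_r; simpl; auto; try lia.

Lemma ue_st_path lam s v dn c k A : represents lam s (OnPath v dn c k) ->
  ue_st lam s A = if memb (path_edge lam v c k) A then [(1, Go (path_edge lam v c k))] else [(1, Wait)].
Proof. intros (Hc & Hd & Hk & Hp & Hg & Ht). unfold ue_st. rewrite Hp, Hg. unfold path_edge. destruct v.
  - replace (k - 1 =? k)%nat with false by (symmetry; apply Nat.eqb_neq; lia). reflexivity.
  - rewrite Nat.eqb_refl. replace (Nat.pred (len lam c - k)) with (len lam c - k - 1)%nat by lia. reflexivity. Qed.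

Lemma path_edge_in lam v dn c k s : represents lam s (OnPath v dn c k) -> In (path_edge lam v c k) (edges lam).
Proof. intros (Hc & Hd & Hk & Hp & Hg & Ht). unfold path_edge. apply In_edges. destruct v; lia. Qed.

Lemma step_exp_path lam p G s v dn c k : represents lam s (OnPath v dn c k) ->
  step_exp lam p (ue_st lam) G s = p * G (advance lam s (Go (path_edge lam v c k))) + (1 - p) * G s.
Proof. intros Hr.
  set (F := fun sg : edge -> bool => if sg (path_edge lam v c k) then G (advance lam s (Go (path_edge lam v c k))) else G s).
  transitivity (Eact p (edges lam) (fun _ => false) F).
  - unfold step_exp. rewrite <- patterns_expectation. apply sumR_map_ext; intros aw _. f_equal.
    unfold F. cbv beta. rewrite (ue_st_path lam s v dn c k (fst aw) Hr). rewrite orb_false_r.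
    destruct (memb (path_edge lam v c k) (fst aw)); unfold sumR; simpl; ring.
  - unfold F. apply Eact_single; auto. apply NoDup_edges. eapply path_edge_in; eauto. Qed.

Lemma represents_enter_path lam s v dn l : pos_lengths lam -> represents lam s (AtHub v dn) -> (l < length lam)%nat -> dn l = false ->
  represents lam (advance lam s (Go (l, exit_index lam v l))) (enter_path lam v dn l).
Proof. intros Hl [Hp Ht] Hln Hd. pose proof (Hl l Hln) as Hlen.
  unfold enter_path, advance; simpl s_pos; simpl s_last; simpl s_trav. rewrite Hp.
  unfold exit_index; destruct v.
  - rewrite cross_src by reflexivity. unfold tgt; simpl.
    destruct (Nat.ltb_spec 1 (len lam l)).
    + rewrite pt_mid by lia. repeat split; auto; try lia.
      intros [a b] Hf. cbn [s_trav]. rewrite Ht by auto. unfold edge_eqb; cbn [fst snd]. bnat.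
    + assert (E : len lam l = 1%nat) by lia.
      replace (pt lam l 1) with VD by (rewrite <- (pt_len lam l) by lia; rewrite E; reflexivity).
      split; auto. intros [a b] Hf. cbn [s_trav]. rewrite Ht by auto. apply In_edges in Hf. unfold edge_eqb, mark_done; cbn [fst snd].
      bnat.
  - assert (Htg : tgt lam (l, (len lam l - 1)%nat) = VD).
    { unfold tgt; simpl. replace (S (len lam l - 1)) with (len lam l) by lia. apply pt_len; lia. }
    destruct (Nat.ltb_spec 1 (len lam l)).
    + rewrite cross_tgt. 2:{ unfold src; simpl. rewrite pt_mid by lia. reflexivity. } 2:{ rewrite Htg; reflexivity. }
      unfold src; simpl. rewrite pt_mid by lia. repeat split; auto; try lia.
      intros [a b] Hf. cbn [s_trav]. rewrite Ht by auto. apply In_edges in Hf. unfold edge_eqb; cbn [fst snd]. bnat; subst; lia.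
    + assert (E : len lam l = 1%nat) by lia.
      rewrite cross_tgt. 2:{ unfold src; simpl. rewrite E. reflexivity. } 2:{ rewrite Htg; reflexivity. }
      unfold src; simpl. rewrite E. simpl. split; auto.
      intros [a b] Hf. cbn [s_trav]. rewrite Ht by auto. apply In_edges in Hf. unfold edge_eqb, mark_done; cbn [fst snd]. bnat; subst; lia. Qed.

Lemma represents_step_path lam s v dn c k : represents lam s (OnPath v dn c k) ->
  represents lam (advance lam s (Go (path_edge lam v c k))) (step_path lam v dn c k).
Proof. intros (Hc & Hd & Hk & Hp & Hg & Ht).
  unfold step_path, advance, path_edge; cbn [s_pos s_last s_trav]. rewrite Hp. destruct v.
  - rewrite cross_src. 2:{ unfold src; cbn [fst snd]. rewrite pt_mid by lia. apply vtx_eqb_refl. }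
    unfold tgt; cbn [fst snd].
    destruct (Nat.ltb_spec (S k) (len lam c)).
    + rewrite pt_mid by lia. repeat split; cbn [s_pos s_last]; auto; try lia; try (f_equal; f_equal; lia).
      intros [a b] Hf. cbn [s_trav]. rewrite Ht by auto. apply In_edges in Hf. unfold edge_eqb; cbn [fst snd].
      destruct (dn a); simpl; auto. bnat.
    + assert (E : len lam c = S k) by lia. rewrite <- E, pt_len by lia. split; auto.
      intros [a b] Hf. cbn [s_trav]. rewrite Ht by auto. apply In_edges in Hf. unfold edge_eqb, mark_done; cbn [fst snd].
      destruct (dn a); simpl; [rewrite ?orb_true_r; auto|]. bnat.
  - assert (Htg : tgt lam (c, (len lam c - k - 1)%nat) = VI c (len lam c - k)).
    { unfold tgt; cbn [fst snd]. replace (S (len lam c - k - 1)) with (len lam c - k)%nat by lia. apply pt_mid; lia. }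
    destruct (Nat.ltb_spec (S k) (len lam c)).
    + rewrite cross_tgt. 2:{ unfold src; cbn [fst snd]. rewrite pt_mid by lia. simpl. bnat. }
      2:{ rewrite Htg; apply vtx_eqb_refl. }
      unfold src; cbn [fst snd]. rewrite pt_mid by lia. repeat split; cbn [s_pos s_last]; auto; try lia; try (f_equal; f_equal; lia).
      f_equal; lia.
      intros [a b] Hf. cbn [s_trav]. rewrite Ht by auto. apply In_edges in Hf. unfold edge_eqb; cbn [fst snd].
      destruct (dn a); simpl; auto. bnat.
    + assert (E : (len lam c - k - 1 = 0)%nat) by lia.
      rewrite cross_tgt. 2:{ unfold src; cbn [fst snd]. rewrite E. reflexivity. } 2:{ rewrite Htg; apply vtx_eqb_refl. }
      unfold src; cbn [fst snd]. rewrite E. split; auto.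
      intros [a b] Hf. cbn [s_trav]. rewrite Ht by auto. apply In_edges in Hf. unfold edge_eqb, mark_done; cbn [fst snd].
      destruct (dn a); simpl; [rewrite ?orb_true_r; auto|]. bnat. all: destruct b; auto; lia. Qed.

Fixpoint rsum (F : nat -> R) (n : nat) : R := match n with O => 0 | S n' => rsum F n' + F n' end.
Fixpoint nsum (F : nat -> nat) (n : nat) : nat := match n with O => 0%nat | S n' => (nsum F n' + F n')%nat end.

Lemma rsum_ext F G n : (forall i, (i < n)%nat -> F i = G i) -> rsum F n = rsum G n.
Proof. induction n; simpl; intros H; auto. rewrite IHn, H; auto. Qed.
Lemma nsum_ext F G n : (forall i, (i < n)%nat -> F i = G i) -> nsum F n = nsum G n.
Proof. induction n; simpl; intros H; auto. rewrite IHn, H; auto. Qed.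
Lemma rsum_plus F G n : rsum (fun i => F i + G i) n = rsum F n + rsum G n.
Proof. induction n; simpl; [ring|rewrite IHn; ring]. Qed.
Lemma rsum_scal c F n : rsum (fun i => c * F i) n = c * rsum F n.
Proof. induction n; simpl; [ring|rewrite IHn; ring]. Qed.
Lemma sumR_seq F n : sumR (map F (seq 0 n)) = rsum F n.
Proof. induction n. reflexivity. rewrite seq_S, map_app, sumR_app, IHn. simpl rsum. simpl map. rewrite sumR_cons, sumR_nil. ring. Qed.
Lemma rsum_INR F n : rsum (fun i => INR (F i)) n = INR (nsum F n).
Proof. induction n; simpl rsum; simpl nsum; auto. rewrite IHn, plus_INR; auto. Qed.
Lemma length_flat_map_seq {B} (g : nat -> list B) n : length (flat_map g (seq 0 n)) = nsum (fun i => length (g i)) n.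
Proof. induction n. reflexivity. rewrite seq_S, flat_map_app, length_app, IHn. simpl. rewrite length_app; simpl; lia. Qed.

Lemma rsum_upd F dn l n : (l < n)%nat -> dn l = false ->
  rsum (fun x => if mark_done dn l x then 0 else F x) n + F l = rsum (fun x => if dn x then 0 else F x) n.
Proof. induction n; intros Hl Hd; [lia|]. simpl. unfold mark_done at 2.
  destruct (Nat.eq_dec l n) as [->|Hne].
  - rewrite Nat.eqb_refl, Hd. simpl. rewrite (rsum_ext _ (fun x => if dn x then 0 else F x)). ring.
    intros i Hi. unfold mark_done. replace (i =? n)%nat with false by (symmetry; apply Nat.eqb_neq; lia). auto.
  - replace (n =? l)%nat with false by (symmetry; apply Nat.eqb_neq; lia). simpl.
    rewrite <- IHn by (auto; lia). ring. Qed.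
Lemma nsum_upd F dn l n : (l < n)%nat -> dn l = false ->
  (nsum (fun x => if mark_done dn l x then 0 else F x) n + F l = nsum (fun x => if dn x then 0 else F x) n)%nat.
Proof. induction n; intros Hl Hd; [lia|]. simpl. unfold mark_done at 2.
  destruct (Nat.eq_dec l n) as [->|Hne].
  - rewrite Nat.eqb_refl, Hd. simpl. rewrite (nsum_ext _ (fun x => if dn x then 0%nat else F x)). lia.
    intros i Hi. unfold mark_done. replace (i =? n)%nat with false by (symmetry; apply Nat.eqb_neq; lia). auto.
  - replace (n =? l)%nat with false by (symmetry; apply Nat.eqb_neq; lia). simpl.
    rewrite <- IHn by (auto; lia). lia. Qed.
Lemma rsum_split F l n : (l < n)%nat -> rsum F n = F l + rsum (fun x => if (x =? l)%nat then 0 else F x) n.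
Proof. induction n; intros Hl; [lia|]. simpl.
  destruct (Nat.eq_dec l n) as [->|Hne].
  - rewrite Nat.eqb_refl. rewrite (rsum_ext (fun x => if (x =? n)%nat then 0 else F x) F). ring.
    intros i Hi. replace (i =? n)%nat with false by (symmetry; apply Nat.eqb_neq; lia). auto.
  - replace (n =? l)%nat with false by (symmetry; apply Nat.eqb_neq; lia). rewrite IHn by lia. ring. Qed.

(** Expected wait until one of [k] given edges is active. *)
Definition gwait (p : R) (k : nat) : R := / (1 - (1 - p) ^ k).
(** Expected total waiting at the hubs when [r] paths remain open and the
    target path is still among them. *)
Fixpoint hub_value (p : R) (r : nat) : R :=
  match r with O => 0 | S r' => gwait p (S r') + INR r' / INR (S r') * hub_value p r' end.
Fixpoint halves (r : nat) : nat * nat := match r with O => (0%nat, 0%nat) | S r' => (S (snd (halves r')), fst (halves r')) end.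

(** Number of unfinished paths; inner edges of the unfinished paths other than
    the target's; edges of the target path before the target edge, seen from
    hub O ([v = true]) or D ([v = false]). *)
Definition open_paths (lam : list nat) (dn : nat -> bool) : nat := nsum (fun l => if dn l then 0%nat else 1%nat) (length lam).
Definition rest_length (lam : list nat) i0 (dn : nat -> bool) : R := rsum (fun l => if dn l || (l =? i0)%nat then 0 else INR (len lam l) - 1) (length lam).
Definition dist_on_path lam i0 j0 (v : bool) : R := if v then INR j0 else INR (len lam i0) - 1 - INR j0.
(** Expected inner waiting on the target path: among [r] open paths the target
    is entered from the current hub with probability ceil(r/2)/r. *)
Definition target_term lam p i0 j0 (v : bool) (r : nat) : R :=
  (INR (fst (halves r)) * dist_on_path lam i0 j0 v + INR (snd (halves r)) * dist_on_path lam i0 j0 (negb v)) / (INR r * p).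

(** Expected remaining time to traverse the target edge (i0, j0) from each phase:
    each other open path is finished first with probability 1/2. *)
Definition value_hub lam p i0 j0 (v : bool) (dn : nat -> bool) : R :=
  if dn i0 then 0 else
  hub_value p (open_paths lam dn) + rest_length lam i0 dn / (2 * p) + target_term lam p i0 j0 v (open_paths lam dn).
Definition value_path lam p i0 j0 (v : bool) (dn : nat -> bool) (c k : nat) : R :=
  if dn i0 then 0 else if (c =? i0)%nat then
    (if v then (if (j0 <? k)%nat then 0 else INR (j0 - k + 1) / p)
     else (if (len lam c - k <=? j0)%nat then 0 else INR (len lam c - k - j0) / p))
  else INR (len lam c - k) / p + value_hub lam p i0 j0 (negb v) (mark_done dn c).
Definition value lam p i0 j0 (a : phase) : R :=
  match a with AtHub v dn => value_hub lam p i0 j0 v dn | OnPath v dn c k => value_path lam p i0 j0 v dn c k end.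
(** Number of edges on unfinished paths: decreases along phase transitions. *)
Definition remaining (lam : list nat) (dn : nat -> bool) : nat := nsum (fun l => if dn l then 0%nat else len lam l) (length lam).
Definition measure lam (a : phase) : nat := match a with AtHub _ dn => remaining lam dn | OnPath _ dn _ k => (remaining lam dn - k)%nat end.

Lemma remaining_mark_done lam dn l : (l < length lam)%nat -> dn l = false -> (remaining lam (mark_done dn l) + len lam l = remaining lam dn)%nat.
Proof. intros; unfold remaining; apply nsum_upd; auto. Qed.

Lemma measure_enter_path lam v dn l : pos_lengths lam -> (l < length lam)%nat -> dn l = false -> (measure lam (enter_path lam v dn l) < measure lam (AtHub v dn))%nat.
Proof. intros Hl Hln Hd. pose proof (remaining_mark_done lam dn l Hln Hd). pose proof (Hl l Hln).
  unfold enter_path. destruct (Nat.ltb_spec 1 (len lam l)); simpl; lia. Qed.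

Lemma measure_step_path lam s v dn c k : represents lam s (OnPath v dn c k) -> (measure lam (step_path lam v dn c k) < measure lam (OnPath v dn c k))%nat.
Proof. intros (Hc & Hd & Hk & _). pose proof (remaining_mark_done lam dn c Hc Hd).
  unfold step_path. destruct (Nat.ltb_spec (S k) (len lam c)); simpl; lia. Qed.

Lemma value_traversed lam p i0 j0 s a : represents lam s a -> In (i0, j0) (edges lam) -> s_trav s (i0, j0) = true -> value lam p i0 j0 a = 0.
Proof. intros Hr He Hs. destruct a as [v dn|v dn c k]; simpl in *.
  - destruct Hr as [_ Ht]. rewrite Ht in Hs by auto. simpl in Hs. unfold value_hub. rewrite Hs. auto.
  - destruct Hr as (_ & _ & _ & _ & _ & Ht). rewrite Ht in Hs by auto. simpl in Hs. unfold value_path.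
    destruct (dn i0); auto. simpl in Hs. apply andb_true_iff in Hs. destruct Hs as [H1 H2].
    apply Nat.eqb_eq in H1. subst. rewrite Nat.eqb_refl. destruct v; rewrite H2; auto. Qed.

Lemma INR_S_sub a b : (b < a)%nat -> INR (a - b) = INR (a - S b) + 1.
Proof. intros H. replace (a - b)%nat with (S (a - S b)) by lia. apply S_INR. Qed.

Lemma value_path_equation lam p i0 j0 s v dn c k : 0 < p -> represents lam s (OnPath v dn c k) -> In (i0, j0) (edges lam) ->
  s_trav s (i0, j0) = false -> value_path lam p i0 j0 v dn c k = / p + value lam p i0 j0 (step_path lam v dn c k).
Proof. intros Hp Hr He Hs. pose proof Hr as (Hc & Hd & Hk & _ & _ & Ht).
  rewrite Ht in Hs by auto. simpl in Hs. apply orb_false_iff in Hs. destruct Hs as [Hd0 Hs].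
  apply In_edges in He. destruct He as [Hi0 Hj0].
  unfold value_path, step_path. rewrite Hd0. destruct (Nat.eqb_spec c i0) as [->|Hne].
  - rewrite Nat.eqb_refl in Hs. simpl in Hs. destruct v.
    + rewrite Hs. destruct (Nat.ltb_spec (S k) (len lam i0)); simpl.
      * unfold value_path; rewrite Hd0, Nat.eqb_refl. apply Nat.ltb_ge in Hs. destruct (Nat.ltb_spec j0 (S k)).
        -- replace j0 with k by lia. replace (k - k + 1)%nat with 1%nat by lia. simpl. field; lra.
        -- replace (j0 - k + 1)%nat with (j0 + 1 - k)%nat by lia.
           rewrite (INR_S_sub (j0 + 1) k) by lia. replace (j0 + 1 - S k)%nat with (j0 - S k + 1)%nat by lia. field; lra.
      * unfold value_hub, mark_done. rewrite Nat.eqb_refl. simpl. apply Nat.ltb_ge in Hs.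
        replace (j0 - k + 1)%nat with 1%nat by lia. simpl. field; lra.
    + rewrite Hs. apply Nat.leb_gt in Hs. destruct (Nat.ltb_spec (S k) (len lam i0)); simpl.
      * unfold value_path; rewrite Hd0, Nat.eqb_refl. destruct (Nat.leb_spec (len lam i0 - S k) j0).
        -- replace (len lam i0 - k - j0)%nat with 1%nat by lia. simpl. field; lra.
        -- replace (len lam i0 - k - j0)%nat with (len lam i0 - j0 - k)%nat by lia.
           rewrite (INR_S_sub (len lam i0 - j0) k) by lia.
           replace (len lam i0 - j0 - S k)%nat with (len lam i0 - S k - j0)%nat by lia. field; lra.
      * unfold value_hub, mark_done. rewrite Nat.eqb_refl. simpl.
        replace (len lam i0 - k - j0)%nat with 1%nat by lia. simpl. field; lra.
  - destruct (Nat.ltb_spec (S k) (len lam c)); simpl.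
    + unfold value_path. rewrite Hd0. replace (c =? i0)%nat with false by (symmetry; apply Nat.eqb_neq; auto).
      rewrite (INR_S_sub (len lam c) k) by lia. field; lra.
    + replace (len lam c - k)%nat with 1%nat by lia. simpl. field; lra. Qed.

Lemma sumR_exits lam v dn F : sumR (map F (exits lam v dn)) = rsum (fun i => if dn i then 0 else F (i, exit_index lam v i)) (length lam).
Proof. unfold exits. rewrite sumR_flat_map, sumR_seq. apply rsum_ext; intros i _.
  destruct (dn i); simpl map; rewrite ?sumR_cons, ?sumR_nil; ring. Qed.
Lemma length_exits lam v dn : length (exits lam v dn) = open_paths lam dn.
Proof. unfold exits, open_paths. rewrite length_flat_map_seq. apply nsum_ext; intros i _. destruct (dn i); auto. Qed.

Lemma open_paths_mark_done lam dn l : (l < length lam)%nat -> dn l = false -> (open_paths lam (mark_done dn l) + 1 = open_paths lam dn)%nat.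
Proof. intros; unfold open_paths. apply (nsum_upd (fun _ => 1%nat)); auto. Qed.
Lemma rest_length_mark_done lam i0 dn l : (l < length lam)%nat -> dn l = false -> l <> i0 ->
  rest_length lam i0 (mark_done dn l) + (INR (len lam l) - 1) = rest_length lam i0 dn.
Proof. intros Hl Hd Hn. unfold rest_length.
  rewrite (rsum_ext (fun l0 => if mark_done dn l l0 || (l0 =? i0)%nat then 0 else INR (len lam l0) - 1)
     (fun x => if mark_done dn l x then 0 else (if (x =? i0)%nat then 0 else INR (len lam x) - 1))).
  rewrite (rsum_ext (fun l0 => if dn l0 || (l0 =? i0)%nat then 0 else INR (len lam l0) - 1)
     (fun x => if dn x then 0 else (if (x =? i0)%nat then 0 else INR (len lam x) - 1))).
  replace (INR (len lam l) - 1) with (if (l =? i0)%nat then 0 else INR (len lam l) - 1) at 1.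
  apply (rsum_upd (fun x => if (x =? i0)%nat then 0 else INR (len lam x) - 1)); auto.
  replace (l =? i0)%nat with false by (symmetry; apply Nat.eqb_neq; auto). auto.
  intros i _; destruct (dn i); auto. intros i _; destruct (mark_done dn l i); auto. Qed.

Lemma count_other_open lam i0 dn : (i0 < length lam)%nat -> dn i0 = false ->
  rsum (fun l => if dn l || (l =? i0)%nat then 0 else 1) (length lam) = INR (open_paths lam dn) - 1.
Proof. intros Hi Hd. unfold open_paths. rewrite <- rsum_INR.
  rewrite (rsum_split (fun i => INR (if dn i then 0%nat else 1%nat)) i0) by auto. rewrite Hd. simpl INR.
  match goal with |- _ = 1 + ?X - 1 => replace (1 + X - 1) with X by ring end.
  apply rsum_ext; intros i _. destruct (dn i), (i =? i0)%nat; simpl; auto. Qed.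

Lemma value_enter_path lam p i0 j0 v dn l : 0 < p -> pos_lengths lam -> (l < length lam)%nat -> dn l = false -> dn i0 = false ->
  (j0 < len lam i0)%nat ->
  value lam p i0 j0 (enter_path lam v dn l) =
  if (l =? i0)%nat then dist_on_path lam i0 j0 v / p else (INR (len lam l) - 1) / p + value_hub lam p i0 j0 (negb v) (mark_done dn l).
Proof. intros Hp Hl Hln Hd Hd0 Hj0. pose proof (Hl l Hln) as Hlen. unfold enter_path.
  destruct (Nat.ltb_spec 1 (len lam l)); simpl.
  - unfold value_path. rewrite Hd0. destruct (Nat.eqb_spec l i0) as [->|Hne].
    + unfold dist_on_path. destruct v.
      * destruct (Nat.ltb_spec j0 1). replace j0 with 0%nat by lia. simpl. field; lra.
        replace (j0 - 1 + 1)%nat with j0 by lia. auto.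
      * destruct (Nat.leb_spec (len lam i0 - 1) j0).
        replace j0 with (len lam i0 - 1)%nat by lia. rewrite minus_INR by lia. simpl. field; lra.
        rewrite !minus_INR by lia. simpl. field; lra.
    + rewrite minus_INR by lia. simpl; auto.
  - assert (E : len lam l = 1%nat) by lia. destruct (Nat.eqb_spec l i0) as [->|Hne].
    + unfold value_hub, mark_done, dist_on_path. rewrite Nat.eqb_refl. simpl. rewrite E in *. destruct v; replace j0 with 0%nat by lia; simpl; field; lra.
    + rewrite E. simpl. field; lra. Qed.

Lemma activation_prob_pos p n : 0 < p <= 1 -> (0 < n)%nat -> 0 < 1 - (1 - p) ^ n.
Proof. intros Hp Hn. pose proof (pow_lt_1_compat (1 - p) n ltac:(lra) Hn). lra. Qed.

Lemma pick_prob_exits lam p v dn : pos_lengths lam -> exits lam v dn <> [] ->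
  pick_prob p (exits lam v dn) = (1 - (1 - p) ^ open_paths lam dn) / INR (open_paths lam dn).
Proof. intros Hl Hne. rewrite <- (length_exits lam v dn).
  assert (Hlen : length (exits lam v dn) <> 0%nat) by (intro E; apply Hne; apply length_zero_iff_nil; auto).
  rewrite <- (pick_prob_total p (edges lam) (fun _ => false) (exits lam v dn)); auto.
  - field. apply not_0_INR; auto.
  - apply NoDup_edges.
  - apply NoDup_exits.
  - apply incl_exits; auto. Qed.

Lemma sum_exit_values lam p i0 j0 v dn r : 0 < p -> pos_lengths lam -> (i0 < length lam)%nat -> (j0 < len lam i0)%nat ->
  dn i0 = false -> open_paths lam dn = S r ->
  sumR (map (fun f => value lam p i0 j0 (enter_path lam v dn (fst f))) (exits lam v dn)) =
  dist_on_path lam i0 j0 v / p +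
  (INR r * (hub_value p r + rest_length lam i0 dn / (2 * p) + target_term lam p i0 j0 (negb v) r) + rest_length lam i0 dn / (2 * p)).
Proof. intros Hp Hl Hi0 Hj0 Hd0 Hr.
  assert (Hrc : forall l, (l < length lam)%nat -> dn l = false -> open_paths lam (mark_done dn l) = r).
  { intros l Hln Hdl. pose proof (open_paths_mark_done lam dn l Hln Hdl). lia. }
  set (C := target_term lam p i0 j0 (negb v) r). set (So0 := rest_length lam i0 dn).
  rewrite sumR_exits. cbn [fst].
  rewrite (rsum_ext _ (fun i => if dn i then 0 else if (i =? i0)%nat then dist_on_path lam i0 j0 v / p else
      (INR (len lam i) - 1) / p + value_hub lam p i0 j0 (negb v) (mark_done dn i))).
  2:{ intros i Hi. destruct (dn i) eqn:Edi; auto. rewrite value_enter_path; auto. }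
  rewrite (rsum_split _ i0 _ Hi0). rewrite Hd0, Nat.eqb_refl. f_equal.
  rewrite (rsum_ext _ (fun x => (hub_value p r + So0 / (2 * p) + C) * (if dn x || (x =? i0)%nat then 0 else 1) +
      / (2 * p) * (if dn x || (x =? i0)%nat then 0 else INR (len lam x) - 1))).
  - rewrite rsum_plus, rsum_scal, rsum_scal, count_other_open, Hr, S_INR; auto. unfold So0, rest_length. field. lra.
  - intros i Hi. destruct (Nat.eqb_spec i i0) as [->|Hne].
    + rewrite orb_true_r. ring.
    + rewrite orb_false_r. destruct (dn i) eqn:Edi. ring.
      unfold value_hub. unfold mark_done at 1. replace (i0 =? i)%nat with false by (symmetry; apply Nat.eqb_neq; auto).
      rewrite Hd0. simpl orb. rewrite Hrc by auto.
      pose proof (rest_length_mark_done lam i0 dn i Hi Edi Hne) as HS. fold So0 in HS.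
      replace (rest_length lam i0 (mark_done dn i)) with (So0 - (INR (len lam i) - 1)) by lra.
      fold C. field. lra. Qed.

(** One-stage equation at a hub: the value is the fixed point of
    V = 1 + (1-p)^r V + pick_prob * (sum of the values after leaving). *)
Lemma value_hub_equation lam p i0 j0 v dn : 0 < p <= 1 -> pos_lengths lam -> (i0 < length lam)%nat -> (j0 < len lam i0)%nat -> dn i0 = false ->
  (1 + pick_prob p (exits lam v dn) * sumR (map (fun f => value lam p i0 j0 (enter_path lam v dn (fst f))) (exits lam v dn))) /
    (1 - (1 - p) ^ (open_paths lam dn)) = value_hub lam p i0 j0 v dn.
Proof. intros Hp Hl Hi0 Hj0 Hd0.
  assert (Hne : exits lam v dn <> []).
  { intro E. assert (Hin : In (i0, exit_index lam v i0) (exits lam v dn)) by (apply In_exits; exists i0; auto).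
    rewrite E in Hin; destruct Hin. }
  pose proof (open_paths_mark_done lam dn i0 Hi0 Hd0) as Hrc.
  rewrite pick_prob_exits by auto.
  destruct (open_paths lam dn) as [|r] eqn:Er; [lia|].
  rewrite (sum_exit_values lam p i0 j0 v dn r) by (auto; lra).
  unfold value_hub. rewrite Hd0, Er.
  assert (HC : INR r * target_term lam p i0 j0 (negb v) r =
               (INR (fst (halves r)) * dist_on_path lam i0 j0 (negb v) + INR (snd (halves r)) * dist_on_path lam i0 j0 v) / p).
  { unfold target_term. rewrite negb_involutive. destruct r as [|r'].
    - simpl. unfold Rdiv. ring.
    - field. split. lra. apply not_0_INR; lia. }
  replace (INR r * (hub_value p r + rest_length lam i0 dn / (2 * p) + target_term lam p i0 j0 (negb v) r)) with
    (INR r * (hub_value p r + rest_length lam i0 dn / (2 * p)) + INR r * target_term lam p i0 j0 (negb v) r) by ring.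
  rewrite HC. unfold target_term. cbn [hub_value halves fst snd]. unfold gwait. rewrite !S_INR.
  assert (Ht : 0 < 1 - (1 - p) ^ S r) by (apply activation_prob_pos; auto; lia).
  field. repeat split; try lra. pose proof (pos_INR r); lra. Qed.

Lemma Un_cv_const c : Un_cv (fun _ => c) c.
Proof. intros eps He. exists 0%nat. intros. unfold R_dist. rewrite Rminus_diag, Rabs_R0; auto. Qed.
Lemma Un_cv_ext u v l : (forall n, u n = v n) -> Un_cv u l -> Un_cv v l.
Proof. intros H Hu eps He. destruct (Hu eps He) as [N HN]. exists N. intros n Hn. rewrite <- H; auto. Qed.
Lemma Un_cv_scal c u l : Un_cv u l -> Un_cv (fun n => c * u n) (c * l).
Proof. intros H. apply (CV_mult (fun _ => c) u); auto. apply Un_cv_const. Qed.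
Lemma Un_cv_sumR {A} (u : nat -> A -> R) (w : A -> R) K : (forall f, In f K -> Un_cv (fun n => u n f) (w f)) ->
  Un_cv (fun n => sumR (map (u n) K)) (sumR (map w K)).
Proof. induction K as [|a K IH]; intros H; simpl map. apply Un_cv_const.
  apply (Un_cv_ext (fun n => u n a + sumR (map (u n) K))). intros; rewrite sumR_cons; auto.
  rewrite sumR_cons. apply CV_plus. apply H; left; auto. apply IH. intros; apply H; right; auto. Qed.

Lemma affine_recursion_bound (x z : nat -> R) a zl N1 d : 0 <= a < 1 ->
  (forall n, (N1 <= n)%nat -> Rabs (z n - zl) < d) -> (forall M, x (S M) = a * x M + z M) ->
  forall k, Rabs (x (N1 + k)%nat - zl / (1 - a)) <= a ^ k * Rabs (x N1 - zl / (1 - a)) + d / (1 - a).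
Proof. intros Ha Hz Hx. set (L := zl / (1 - a)). set (D := Rabs (x N1 - L)).
  assert (HL : a * L + zl = L) by (unfold L; field; lra).
  assert (Hd : 0 <= d) by (pose proof (Hz N1 (Nat.le_refl _)); pose proof (Rabs_pos (z N1 - zl)); lra).
  assert (Hd' : 0 <= d / (1 - a)) by (unfold Rdiv; apply Rmult_le_pos; [lra | apply Rlt_le, Rinv_0_lt_compat; lra]).
  induction k.
  - rewrite Nat.add_0_r; simpl. fold D. lra.
  - rewrite Nat.add_succ_r, Hx. specialize (Hz (N1 + k)%nat ltac:(lia)).
    replace (a * x (N1 + k)%nat + z (N1 + k)%nat - L) with (a * (x (N1 + k)%nat - L) + (z (N1 + k)%nat - zl))
      by (rewrite <- HL at 2; ring).
    eapply Rle_trans. apply Rabs_triang. rewrite Rabs_mult, (Rabs_right a) by lra.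
    apply Rle_trans with (a * (a ^ k * D + d / (1 - a)) + d).
    + apply Rplus_le_compat; [apply Rmult_le_compat_l|]; lra.
    + replace (a * (a ^ k * D + d / (1 - a)) + d) with (a ^ S k * D + d / (1 - a)) by (simpl; field; lra). lra. Qed.

Lemma Un_cv_affine_recursion (x z : nat -> R) a zl : 0 <= a < 1 -> Un_cv z zl -> (forall M, x (S M) = a * x M + z M) ->
  Un_cv x (zl / (1 - a)).
Proof. intros Ha Hz Hx eps He.
  destruct (Hz (eps * (1 - a) / 2)) as [N1 HN1]. { apply Rmult_lt_0_compat; [apply Rmult_lt_0_compat|]; lra. }
  set (D := Rabs (x N1 - zl / (1 - a))).
  assert (HD : 0 <= D) by apply Rabs_pos.
  pose proof (affine_recursion_bound x z a zl N1 (eps * (1 - a) / 2) Ha HN1 Hx) as Hk. fold D in Hk.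
  destruct (pow_lt_1_zero a ltac:(rewrite Rabs_right; lra) (eps / (2 * (D + 1)))) as [N2 HN2].
  { apply Rdiv_lt_0_compat; lra. }
  exists (N1 + N2)%nat. intros n Hn. unfold R_dist.
  replace n with (N1 + (n - N1))%nat by lia. eapply Rle_lt_trans. apply Hk.
  specialize (HN2 (n - N1)%nat ltac:(lia)). rewrite Rabs_right in HN2 by (apply Rle_ge, pow_le; lra).
  assert (a ^ (n - N1) * D <= eps / (2 * (D + 1)) * D) by (apply Rmult_le_compat_r; lra).
  assert (eps / (2 * (D + 1)) * D < eps / 2).
  { apply Rmult_lt_reg_r with (2 * (D + 1)). lra.
    replace (eps / (2 * (D + 1)) * D * (2 * (D + 1))) with (eps * D) by (field; lra). nra. }
  replace (eps * (1 - a) / 2 / (1 - a)) with (eps / 2) by (field; lra). lra. Qed.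

(** Inductive step at a hub: if the tail sums converge after each possible exit,
    they converge at the hub (solve the affine first-step recursion). *)
Lemma converges_at_hub lam p i0 j0 (ss : sstrategy) s v dn : 0 < p <= 1 -> pos_lengths lam -> In (i0, j0) (edges lam) ->
  (forall A, ss s A = ue_st lam s A) -> represents lam s (AtHub v dn) -> s_trav s (i0, j0) = false ->
  (forall l, (l < length lam)%nat -> dn l = false ->
     Un_cv (fun M => tail_sum_st lam p ss (i0, j0) M (advance lam s (Go (l, exit_index lam v l))))
           (value lam p i0 j0 (enter_path lam v dn l))) ->
  Un_cv (fun M => tail_sum_st lam p ss (i0, j0) M s) (value_hub lam p i0 j0 v dn).
Proof. intros Hp Hl He Hss Hr Hs IH. pose proof He as [Hi0 Hj0]%In_edges.
  pose proof Hr as [_ Ht]. rewrite Ht in Hs by auto. simpl in Hs.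
  set (K := exits lam v dn).
  assert (HK : K <> []).
  { intro E. assert (Hin : In (i0, exit_index lam v i0) K) by (apply In_exits; exists i0; auto). rewrite E in Hin; auto. }
  assert (Hrec : forall M, tail_sum_st lam p ss (i0, j0) (S M) s = (1 - p) ^ open_paths lam dn * tail_sum_st lam p ss (i0, j0) M s +
      (1 + pick_prob p K * sumR (map (fun f => tail_sum_st lam p ss (i0, j0) M (advance lam s (Go f))) K))).
  { intros M. rewrite tail_sum_st_S. rewrite Ht by auto. simpl fst. rewrite Hs.
    rewrite (step_exp_ext_strategy _ _ _ (ue_st lam)) by auto.
    rewrite (step_exp_hub lam p _ s v dn) by auto. fold K. unfold K. rewrite length_exits. ring. }
  rewrite <- (value_hub_equation lam p i0 j0 v dn) by auto. fold K.
  assert (Hr1 : (0 < open_paths lam dn)%nat) by (pose proof (open_paths_mark_done lam dn i0 Hi0 Hs); lia).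
  apply (Un_cv_affine_recursion _ (fun M => 1 + pick_prob p K * sumR (map (fun f => tail_sum_st lam p ss (i0, j0) M (advance lam s (Go f))) K))).
  - pose proof (activation_prob_pos p (open_paths lam dn) Hp Hr1). pose proof (pow_le (1 - p) (open_paths lam dn) ltac:(lra)). lra.
  - apply CV_plus. apply Un_cv_const. apply Un_cv_scal.
    apply (Un_cv_sumR (fun M f => tail_sum_st lam p ss (i0, j0) M (advance lam s (Go f)))
                      (fun f => value lam p i0 j0 (enter_path lam v dn (fst f)))).
    intros f Hf. apply In_exits in Hf. destruct Hf as [l [Hln [Hdl ->]]]. apply IH; auto.
  - exact Hrec. Qed.

Lemma converges_on_path lam p i0 j0 (ss : sstrategy) s v dn c k : 0 < p <= 1 -> In (i0, j0) (edges lam) ->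
  (forall A, ss s A = ue_st lam s A) -> represents lam s (OnPath v dn c k) -> s_trav s (i0, j0) = false ->
  Un_cv (fun M => tail_sum_st lam p ss (i0, j0) M (advance lam s (Go (path_edge lam v c k))))
        (value lam p i0 j0 (step_path lam v dn c k)) ->
  Un_cv (fun M => tail_sum_st lam p ss (i0, j0) M s) (value_path lam p i0 j0 v dn c k).
Proof. intros Hp He Hss Hr Hs IH.
  set (s' := advance lam s (Go (path_edge lam v c k))).
  assert (Hrec : forall M, tail_sum_st lam p ss (i0, j0) (S M) s = (1 - p) * tail_sum_st lam p ss (i0, j0) M s +
      (1 + p * tail_sum_st lam p ss (i0, j0) M s')).
  { intros M. rewrite tail_sum_st_S, Hs.
    rewrite (step_exp_ext_strategy _ _ _ (ue_st lam)) by auto.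
    rewrite (step_exp_path lam p _ s v dn c k) by auto. fold s'. ring. }
  rewrite (value_path_equation lam p i0 j0 s v dn c k) by (auto; lra).
  replace (/ p + value lam p i0 j0 (step_path lam v dn c k))
    with ((1 + p * value lam p i0 j0 (step_path lam v dn c k)) / (1 - (1 - p))) by (field; lra).
  apply (Un_cv_affine_recursion _ (fun M => 1 + p * tail_sum_st lam p ss (i0, j0) M s')).
  - lra.
  - apply CV_plus. apply Un_cv_const. apply Un_cv_scal. exact IH.
  - exact Hrec. Qed.

Lemma tail_sum_converges lam p i0 j0 (ss : sstrategy) : 0 < p <= 1 -> pos_lengths lam -> In (i0, j0) (edges lam) ->
  (forall s a A, represents lam s a -> ss s A = ue_st lam s A) ->
  forall N a s, (measure lam a < N)%nat -> represents lam s a ->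
  Un_cv (fun M => tail_sum_st lam p ss (i0, j0) M s) (value lam p i0 j0 a).
Proof. intros Hp Hl He Hss N. induction N as [|N IHN]; intros a s Hmu Hr; [lia|].
  destruct (s_trav s (i0, j0)) eqn:Hs.
  - rewrite (value_traversed lam p i0 j0 s a) by auto.
    apply (Un_cv_ext (fun _ => 0)). intros; rewrite tail_sum_st_traversed; auto. apply Un_cv_const.
  - destruct a as [v dn | v dn c k]; simpl value.
    + apply converges_at_hub; eauto.
      intros l Hln Hdl. apply IHN.
      * pose proof (measure_enter_path lam v dn l Hl Hln Hdl). cbn [measure] in *. lia.
      * apply represents_enter_path; auto.
    + apply (converges_on_path lam p i0 j0 ss s v dn c k); eauto. apply IHN.
      * pose proof (measure_step_path lam s v dn c k Hr). cbn [measure] in *. lia.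
      * apply represents_step_path; auto. Qed.

Lemma halves_double m : halves (2 * m) = (m, m).
Proof. induction m. reflexivity. replace (2 * S m)%nat with (S (S (2 * m))) by lia. cbn [halves]. rewrite IHm. reflexivity. Qed.

Lemma Phi_S p m : (1 <= m)%nat -> Phi p (S m) =
  / 2 * / (1 - (1 - p) ^ (2 * S m)) + (/ 2 - / (2 * INR (S m))) * / (1 - (1 - p) ^ (2 * S m - 1))
  - / (2 * INR (S m)) * (sumR (map (fun k => / (1 - (1 - p) ^ k)) (seq 1 (2 * (S m - 1)))) + / p)
  + (INR (S m) - 1) / INR (S m) * Phi p m.
Proof. intros H. destruct m; [lia|]. reflexivity. Qed.

Lemma sumR_seq1 F n : sumR (map F (seq 1 n)) = rsum (fun i => F (S i)) n.
Proof. rewrite <- seq_shift, map_map. apply sumR_seq. Qed.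

Lemma gwait_1 p : 0 < p -> gwait p 1 = / p.
Proof. intros; unfold gwait. f_equal. simpl; ring. Qed.

(** With 2m open paths the hub waiting is (sum_{k<=2m} gwait k + 1/p)/2 + Phi_m:
    this is where the recursion defining Phi comes from. *)
Lemma hub_value_Phi p m : 0 < p <= 1 -> (1 <= m)%nat ->
  hub_value p (2 * m) = (rsum (fun i => gwait p (S i)) (2 * m) + / p) / 2 + Phi p m.
Proof. intros Hp Hm. induction m as [|m IH]; [lia|].
  destruct (Nat.eq_dec m 0) as [->|Hm0].
  - simpl hub_value. simpl rsum. simpl Phi. rewrite gwait_1 by lra. unfold gwait. simpl INR.
    pose proof (activation_prob_pos p 2 Hp ltac:(lia)). field. lra.
  - rewrite Phi_S by lia. replace (2 * S m)%nat with (S (S (2 * m))) by lia.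
    replace (S (S (2 * m)) - 1)%nat with (S (2 * m)) by lia. replace (2 * (S m - 1))%nat with (2 * m)%nat by lia.
    rewrite sumR_seq1. cbn [hub_value rsum]. rewrite IH by lia. unfold gwait.
    set (X := rsum (fun i => / (1 - (1 - p) ^ S i)) (2 * m)).
    pose proof (activation_prob_pos p (S (S (2 * m))) Hp ltac:(lia)). pose proof (activation_prob_pos p (S (2 * m)) Hp ltac:(lia)).
    rewrite !S_INR, mult_INR. simpl INR. field. pose proof (pos_INR m). repeat split; lra. Qed.

Lemma value_hub_start lam p i0 j0 m : 0 < p <= 1 -> (1 <= m)%nat -> length lam = (2 * m)%nat ->
  (i0 < length lam)%nat -> (j0 < len lam i0)%nat ->
  value_hub lam p i0 j0 true (fun _ => false) = (theta p lam + / p) / 2 + Phi p m.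
Proof. intros Hp Hm Hlen Hi0 Hj0. unfold value_hub, target_term. simpl negb.
  assert (Hrc : open_paths lam (fun _ => false) = (2 * m)%nat).
  { unfold open_paths. rewrite Hlen. clear. induction (2 * m)%nat; simpl; lia. }
  rewrite Hrc, halves_double. simpl fst; simpl snd.
  unfold theta. rewrite sumR_seq, rsum_plus.
  rewrite (rsum_ext (fun i => (INR (len lam i) - 1) / p) (fun i => / p * (INR (len lam i) - 1))) by (intros; unfold Rdiv; ring).
  rewrite rsum_scal. rewrite (rsum_split (fun i => INR (len lam i) - 1) i0) by auto.
  unfold rest_length. simpl orb. rewrite Hlen. rewrite hub_value_Phi by auto. unfold gwait, dist_on_path.
  set (Y := rsum (fun x : nat => if (x =? i0)%nat then 0 else INR (len lam x) - 1) (2 * m)).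
  rewrite mult_INR. simpl INR. field. pose proof (lt_0_INR m ltac:(lia)). lra. Qed.

(** [uniform_eulerian] may propose illegal moves in unreachable histories; this
    guarded version waits instead, and agrees with it on represented states. *)
Definition ue_legal_st lam : sstrategy := fun s A =>
  let o := ue_st lam s A in
  if forallb (fun wm => legal lam (s_pos s) A (snd wm)) o then o else [(1, Wait)].
Definition ue_legal lam : strategy := fun h A => ue_legal_st lam (state_of lam h) A.

Lemma ue_st_legal lam s a A : pos_lengths lam -> represents lam s a -> forallb (fun wm => legal lam (s_pos s) A (snd wm)) (ue_st lam s A) = true.
Proof. intros Hl Hr. destruct a as [v dn|v dn c k].
  - rewrite (ue_st_hub lam s v dn A Hl Hr). cbv zeta.
    destruct (filter (fun f => memb f A) (exits lam v dn)) as [|x c] eqn:E. reflexivity.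
    apply forallb_forall. intros wm Hwm. rewrite <- E in Hwm. apply in_map_iff in Hwm.
    destruct Hwm as [f [<- Hf]]. simpl. apply filter_In in Hf. destruct Hf as [Hf HA].
    rewrite HA. pose proof Hf as Hf'. apply (incl_exits lam v dn Hl) in Hf'. apply memb_In in Hf'. rewrite Hf'. simpl.
    destruct Hr as [Hp _]. rewrite Hp. apply In_exits in Hf. destruct Hf as [i [Hi [_ ->]]]. unfold exit_index.
    destruct v. rewrite incident_O; auto. pose proof (Hl i Hi). rewrite incident_D by lia. apply Nat.eqb_eq; lia.
  - rewrite (ue_st_path lam s v dn c k A Hr). destruct (memb (path_edge lam v c k) A) eqn:E; [|reflexivity].
    simpl. rewrite E. pose proof (path_edge_in lam v dn c k s Hr) as Hin. apply memb_In in Hin. rewrite Hin. simpl.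
    destruct Hr as (Hc & Hd & Hk & Hp & _). rewrite Hp. unfold incident, path_edge. destruct v.
    + unfold src; simpl fst; simpl snd. rewrite pt_mid by lia. rewrite vtx_eqb_refl. reflexivity.
    + unfold tgt; simpl fst; simpl snd. replace (S (len lam c - k - 1)) with (len lam c - k)%nat by lia.
      rewrite (pt_mid lam c (len lam c - k)) by lia. rewrite vtx_eqb_refl, orb_true_r. reflexivity. Qed.

Lemma ue_legal_st_represents lam s a A : pos_lengths lam -> represents lam s a -> ue_legal_st lam s A = ue_st lam s A.
Proof. intros Hl Hr. unfold ue_legal_st. cbv zeta. rewrite (ue_st_legal lam s a A Hl Hr). reflexivity. Qed.

Lemma ue_st_distribution lam s A : sumR (map fst (ue_st lam s A)) = 1 /\ forall wm, In wm (ue_st lam s A) -> 0 <= fst wm.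
Proof. unfold ue_st. destruct (s_pos s) as [| |i j].
  3:{ destruct (memb _ A); simpl; split; try (unfold sumR; simpl; ring); intros wm [<-|[]]; simpl; lra. }
  all: destruct (filter _ (edges lam)) as [|x c] eqn:E; [simpl; split; [unfold sumR; simpl; ring| intros wm [<-|[]]; simpl; lra]|].
  all: split; [rewrite map_map; cbn [fst]; rewrite sumR_const; field; apply not_0_INR; simpl; lia
             | intros wm Hwm; apply in_map_iff in Hwm; destruct Hwm as [f [<- _]]; cbn [fst]; left; apply Rinv_0_lt_compat, lt_0_INR; simpl; lia]. Qed.

Lemma ue_legal_valid lam : valid_strategy lam (ue_legal lam).
Proof. intros h A. unfold ue_legal, ue_legal_st. cbv zeta. unfold state_of at 1 2; simpl s_pos.
  destruct (forallb _ _) eqn:E.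
  - destruct (ue_st_distribution lam (state_of lam h) A) as [H1 H2]. split; auto.
    intros wm Hwm. split. apply H2; auto. rewrite forallb_forall in E. apply (E wm Hwm).
  - split. intros wm [<-|[]]; simpl; split; auto; lra. unfold sumR; simpl; ring. Qed.

Lemma uniform_exp_time m lam p (ss : sstrategy) (sg : strategy) :
  (1 <= m)%nat -> length lam = (2 * m)%nat -> pos_lengths lam -> 0 < p <= 1 ->
  (forall h A, sg h A = ss (state_of lam h) A) -> (forall s a A, represents lam s a -> ss s A = ue_st lam s A) ->
  forall e, In e (edges lam) -> exp_time lam p sg e ((theta p lam + / p) / 2 + Phi p m).
Proof. intros Hm Hlen Hl Hp Hsg Hss [i0 j0] He. pose proof He as [Hi0 Hj0]%In_edges.
  rewrite <- (value_hub_start lam p i0 j0 m) by auto.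
  assert (Hr : represents lam (state_of lam []) (AtHub true (fun _ => false))) by (split; auto).
  intros eps Heps.
  destruct (tail_sum_converges lam p i0 j0 ss Hp Hl He Hss _ _ _ (Nat.lt_succ_diag_r _) Hr eps Heps) as [N HN].
  exists N. intros n Hn. rewrite (partial_tails_as_tail_sum_st lam p sg ss (i0, j0) Hsg n). apply HN. lia. Qed.

Lemma patterns_nonneg p L : 0 <= p <= 1 -> forall aw, In aw (patterns p L) -> 0 <= snd aw.
Proof. intros Hp. induction L; simpl; intros aw Haw. destruct Haw as [<-|[]]; simpl; lra.
  apply in_app_or in Haw. destruct Haw as [H|H]; apply in_map_iff in H; destruct H as [x [<- Hx]]; simpl;
  apply Rmult_le_pos; try lra; apply IHL; auto. Qed.

Lemma dist_nonneg lam p sg : 0 <= p <= 1 -> valid_strategy lam sg -> forall t hw, In hw (Defs.dist lam p sg t) -> 0 <= snd hw.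
Proof. intros Hp Hv t. induction t; simpl; intros hw Hhw. destruct Hhw as [<-|[]]; simpl; lra.
  apply in_flat_map in Hhw. destruct Hhw as [x [Hx Hhw]]. apply in_flat_map in Hhw. destruct Hhw as [aw [Haw Hhw]].
  apply in_map_iff in Hhw. destruct Hhw as [wm [<- Hwm]]. simpl.
  destruct (Hv (fst x) (fst aw)) as [H _]. destruct (H wm Hwm) as [Hw _].
  apply Rmult_le_pos; auto. apply Rmult_le_pos. apply IHt; auto. eapply patterns_nonneg; eauto. Qed.

Lemma exp_nonneg lam p sg e E : 0 <= p <= 1 -> valid_strategy lam sg -> exp_time lam p sg e E -> 0 <= E.
Proof. intros Hp Hv HE. assert (Hs : forall n, 0 <= sum_f_R0 (Defs.tail lam p sg e) n).
  { assert (Ht : forall t, 0 <= Defs.tail lam p sg e t).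
    { intros t. unfold Defs.tail. apply sumR_nonneg. intros hw Hhw. destruct (traversed _ _); [lra|].
      eapply dist_nonneg; eauto. }
    induction n; simpl; auto. pose proof (Ht (S n)); lra. }
  destruct (Rle_or_lt 0 E) as [H|H]; auto. exfalso.
  destruct (HE (- E) ltac:(lra)) as [N HN]. specialize (HN N (Nat.le_refl N)). specialize (Hs N).
  unfold R_dist in HN. rewrite Rabs_right in HN by lra. lra. Qed.

Lemma guarantees_nonneg lam p e M : 0 <= p <= 1 -> In e (edges lam) -> guarantees lam p M -> 0 <= M.
Proof. intros Hp He [sg [Hv HM]]. destruct (HM e He) as [E [HE HEM]].
  pose proof (exp_nonneg lam p sg e E Hp Hv HE). lra. Qed.

(** The set of guaranteed bounds, being bounded below and nonempty, has an
    infimum, and [val] is at most any guaranteed bound. *)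
Lemma val_le_guarantee lam p M : (forall M', guarantees lam p M' -> 0 <= M') -> guarantees lam p M -> val lam p <= M.
Proof. intros Hlow HG.
  assert (Hex : exists v, is_glb (guarantees lam p) v).
  { destruct (completeness (fun y => guarantees lam p (- y))) as [u [Hu1 Hu2]].
    - exists 0. intros y Hy. pose proof (Hlow _ Hy). lra.
    - exists (- M). rewrite Ropp_involutive; auto.
    - exists (- u). split.
      + intros x Hx. assert (- x <= u) by (apply Hu1; rewrite Ropp_involutive; auto). lra.
      + intros y Hy. assert (u <= - y). { apply Hu2. intros z Hz. pose proof (Hy _ Hz). lra. } lra. }
  pose proof (epsilon_spec (inhabits 0) (is_glb (guarantees lam p)) Hex) as [H1 _].
  unfold val. apply H1. exact HG. Qed.

Theorem mainTheorem13 (m : nat) (lam : list nat) (p : R) :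
  (1 <= m)%nat ->
  length lam = (2 * m)%nat ->
  (forall l, In l lam -> (0 < l)%nat) ->
  0 < p <= 1 ->
  (forall e, In e (edges lam) ->
     exp_time lam p (uniform_eulerian lam) e ((theta p lam + / p) / 2 + Phi p m))
  /\ val lam p <= (theta p lam + / p) / 2 + Phi p m.
Proof. intros Hm Hlen Hpos Hp.
  assert (Hl : pos_lengths lam) by (intros i Hi; apply Hpos, nth_In; auto).
  split.
  - apply (uniform_exp_time m lam p (ue_st lam)); auto using uniform_eulerian_state.
  - assert (He0 : In (0%nat, 0%nat) (edges lam)) by (apply In_edges; split; [lia | apply Hl; lia]).
    apply val_le_guarantee.
    + intros M. apply (guarantees_nonneg lam p (0%nat, 0%nat)); [lra | exact He0].
    + exists (ue_legal lam). split; [apply ue_legal_valid|]. intros e He.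
      eexists. split; [|apply Rle_refl].
      apply (uniform_exp_time m lam p (ue_legal_st lam)); auto.
      intros s a A Hr; apply (ue_legal_st_represents lam s a A); auto. Qed.
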